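(* Let $V$ be a $p$-dimensional real vector space, $\Lambda\subset V$ a full lattice, and $X=\bigcup_{\alpha\in\mathfrak I}X_\alpha\subset V$ an ordered $p$-complex which is a $\Lambda$-complex. Let $M_1<M_2$ be integers, $\widehat\Lambda:=\Lambda\times(M_2-M_1)\mathbb Z\subset V\times\mathbb R$, and $\omega:V\to\mathbb R$ linear. Then the ordered $(p+1)$-complex $Y=Y(X,\omega,[M_1,M_2])=\bigcup_{\gamma\in J}Y_\gamma\subset V\times\mathbb R$ is a $\widehat\Lambda$-complex. Moreover, defining $\Omega:V\times\mathbb R\to\mathbb R$ by $\Omega(s\times t)=\omega(s)+t$, for every $\gamma=(\alpha,v,\ell)\in J$ and every $\kappa\in Y_\gamma$, $$A(v)+\ell-1\le\Omega(\kappa)\le A(v)+\ell.$$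
   Context: Ordered complexes: an ordered $p$-complex in a $p$-dimensional real vector space $V$ is a family $X=\bigcup_{\alpha\in\mathfrak I}X_\alpha$ of $p$-simplices $X_\alpha\subset V$ (convex hulls of $p+1$ affinely independent points, vertex set $\mathrm{Vt}(X_\alpha)$), each with a total order $\prec_\alpha$ on $\mathrm{Vt}(X_\alpha)$; $[s_1,\dots,s_t]$ denotes a convex hull. For $x$ in a simplex $S$, $\mathrm{SpVt}(x)$ (spanning vertices) is the set of vertices of $S$ whose barycentric coordinate in $x$ is positive. $\Lambda$-complex: $X$ is a $\Lambda$-complex if (i) for all $\alpha,\beta$, $X_\alpha\cap X_\beta$ is empty or equals the convex hull of $\mathrm{Vt}(X_\alpha)\cap\mathrm{Vt}(X_\beta)$; (ii) for $v,w\in\mathrm{Vt}(X_\alpha)\cap\mathrm{Vt}(X_\beta)$, $v\prec_\alpha w\iff v\prec_\beta w$; (iii) if $v,w\in\mathrm{Vt}(X_\alpha)$, $\lambda\in\Lambda$ and $v+\lambda,w+\lambda\in\mathrm{Vt}(X_{\alpha'})$, then $v\prec_\alpha w\iff v+\lambda\prec_{\alpha'}w+\lambda$; (iv) the quotient map $V\to V/\Lambda$ restricted to $X$ is surjective and is injective on the union of the interiors of the $X_\alpha$; (v) if $x,x'\in X$, $\lambda\in\Lambda$, $x'=x+\lambda$, then $\mathrm{SpVt}(x')=\mathrm{SpVt}(x)+\lambda$ (by (i), $\mathrm{SpVt}(x)$ does not depend on the simplex containing $x$). Construction $Y(X,\omega,[M_1,M_2])$: let $A:V\to(0,1]$ be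 defined by $A(u)-\omega(u)\in\mathbb Z$, $0<A(u)\le1$, and put $a(u):=A(u)-\omega(u)\in\mathbb Z$. Define the order $\prec_\alpha^A$ on $\mathrm{Vt}(X_\alpha)$: $u\prec_\alpha^A u'$ iff $A(u)<A(u')$, or $A(u)=A(u')$ and $u\prec_\alpha u'$. Let $J=\{(\alpha,v,\ell):\alpha\in\mathfrak I,\ v\in\mathrm{Vt}(X_\alpha),\ \ell\in\mathbb Z,\ M_1\le\ell<M_2\}$. For $\gamma=(\alpha,v,\ell)\in J$, list $\mathrm{Vt}(X_\alpha)$ as $v_0\prec_\alpha^A\cdots\prec_\alpha^A v_p$ with $v=v_j$, and set $$Y_\gamma=[v_0\times(a(v_0)+\ell),\dots,v_j\times(a(v_j)+\ell),\ v_j\times(a(v_j)+\ell-1),\ v_{j+1}\times(a(v_{j+1})+\ell-1),\dots,v_p\times(a(v_p)+\ell-1)]\subset V\times\mathbb R,$$ ordered by: $\rho\prec_\gamma\rho'$ iff $\pi_V(\rho)\prec_\alpha\pi_V(\rho')$, or $\pi_V(\rho)=\pi_V(\rho')$ and $\pi_{\mathbb R}(\rho')<\pi_{\mathbb R}(\rho)$ ($\pi_V,\pi_{\mathbb R}$ the projections). Then $Y(X,\omega,[M_1,M_2]):=\bigcup_{\gamma\in J}Y_\gamma$. *)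

From Stdlib Require Import Reals List ZArith Classical ClassicalEpsilon FunctionalExtensionality.
From Stdlib Require Vectors.Fin.
Import ListNotations.
Open Scope R_scope.

(** A concrete real vector space: carrier, operations, and the "coordinatewise
    eps-close" relation used to define topological interiors. *)
Record RVS := mkRVS {
  car :> Type;
  vadd : car -> car -> car;
  vscale : R -> car -> car;
  vzero : car;
  vclose : R -> car -> car -> Prop
}.

Definition Rn (p : nat) : RVS :=
  mkRVS (Fin.t p -> R)
    (fun x y i => x i + y i) (fun c x i => c * x i) (fun _ => 0)
    (fun e x y => forall i, Rabs (x i - y i) < e).

Definition RnR (p : nat) : RVS :=
  mkRVS ((Fin.t p -> R) * R)
    (fun x y => (fun i => fst x i + fst y i, snd x + snd y))
    (fun c x => (fun i => c * fst x i, c * snd x))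
    (fun _ => 0, 0)
    (fun e x y => (forall i, Rabs (fst x i - fst y i) < e) /\ Rabs (snd x - snd y) < e).

Section Generic.
Variable E : RVS.

Fixpoint lc (cs : list R) (L : list E) : E :=
  match cs, L with
  | c :: cs', v :: L' => vadd E (vscale E c v) (lc cs' L')
  | _, _ => vzero E
  end.

Definition sumR (cs : list R) : R := fold_right Rplus 0 cs.

Definition bary (L : list E) (cs : list R) (x : E) : Prop :=
  length cs = length L /\ Forall (fun c => 0 <= c) cs /\ sumR cs = 1 /\ x = lc cs L.

Definition conv (L : list E) (x : E) : Prop := exists cs, bary L cs x.

Definition convP (P : E -> Prop) (x : E) : Prop :=
  exists L, Forall P L /\ conv L x.

Definition aff_indep (L : list E) : Prop :=
  forall cs, length cs = length L -> sumR cs = 0 -> lc cs L = vzero E ->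
    Forall (fun c => c = 0) cs.

Definition lin_indep (L : list E) : Prop :=
  forall cs, length cs = length L -> lc cs L = vzero E -> Forall (fun c => c = 0) cs.

(** An ordered q-simplex is encoded by the list of its q+1 affinely independent
    vertices, listed in increasing order; the simplex itself is [conv L]. *)
Definition is_simplex (q : nat) (L : list E) : Prop :=
  length L = S q /\ NoDup L /\ aff_indep L.

Definition prec (L : list E) (v w : E) : Prop :=
  exists i j, (i < j)%nat /\ nth_error L i = Some v /\ nth_error L j = Some w.

Definition SpVt (L : list E) (x w : E) : Prop :=
  exists cs i c, bary L cs x /\ nth_error L i = Some w /\ nth_error cs i = Some c /\ 0 < c.

Definition interior (L : list E) (x : E) : Prop :=
  exists e, 0 < e /\ forall y, vclose E e x y -> conv L y.

Definition ordered_complex (q : nat) {I : Type} (X : I -> list E) : Prop :=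
  forall a, is_simplex q (X a).

Definition inX {I : Type} (X : I -> list E) (x : E) : Prop := exists a, conv (X a) x.

Definition Lambda_complex (Lam : E -> Prop) {I : Type} (X : I -> list E) : Prop :=
  (forall a b,
     (forall x, ~ (conv (X a) x /\ conv (X b) x)) \/
     (forall x, (conv (X a) x /\ conv (X b) x) <->
                convP (fun v => In v (X a) /\ In v (X b)) x)) /\
  (forall a b v w, In v (X a) -> In w (X a) -> In v (X b) -> In w (X b) ->
     (prec (X a) v w <-> prec (X b) v w)) /\
  (forall a a' v w l, Lam l -> In v (X a) -> In w (X a) ->
     In (vadd E v l) (X a') -> In (vadd E w l) (X a') ->
     (prec (X a) v w <-> prec (X a') (vadd E v l) (vadd E w l))) /\
  (* (iv) surjectivity of V -> V/Lam on X *)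
  (forall y, exists x l, inX X x /\ Lam l /\ y = vadd E x l) /\
  (* (iv) injectivity on the union of interiors *)
  (forall a b x y l, interior (X a) x -> interior (X b) y -> Lam l ->
     y = vadd E x l -> y = x) /\
  (forall a a' x x' l, conv (X a) x -> conv (X a') x' -> Lam l -> x' = vadd E x l ->
     forall w, SpVt (X a') x' w <-> exists u, SpVt (X a) x u /\ w = vadd E u l).

End Generic.

Arguments conv {E}. Arguments prec {E}. Arguments SpVt {E}.

Definition full_lattice (p : nat) (Lam : Rn p -> Prop) : Prop :=
  exists B : list (Rn p), length B = p /\ lin_indep (Rn p) B /\
    forall l, Lam l <-> exists zs : list Z, length zs = p /\ l = lc (Rn p) (map IZR zs) B.

Definition linear_form (p : nat) (w : Rn p -> R) : Prop :=
  (forall x y, w (vadd (Rn p) x y) = w x + w y) /\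
  (forall c x, w (vscale (Rn p) c x) = c * w x).

(** a(u) in Z and A(u) = omega(u) + a(u) in (0,1] *)
Definition aZ {p} (w : Rn p -> R) (u : Rn p) : Z := up (- w u).
Definition AR {p} (w : Rn p -> R) (u : Rn p) : R := w u + IZR (aZ w u).

Definition precA {p} (w : Rn p -> R) (L : list (Rn p)) (u u' : Rn p) : Prop :=
  AR w u < AR w u' \/ (AR w u = AR w u' /\ prec L u u').

Definition LamHat {p} (Lam : Rn p -> Prop) (M1 M2 : Z) (x : RnR p) : Prop :=
  Lam (fst x) /\ exists z : Z, snd x = IZR ((M2 - M1) * z).

Record Jidx {p} {I : Type} (X : I -> list (Rn p)) (M1 M2 : Z) := mkJ {
  jal : I;
  jv : Rn p;
  jl : Z;
  jv_in : In jv (X jal);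
  jl_range : (M1 <= jl < M2)%Z
}.
Arguments jal {p I X M1 M2}. Arguments jv {p I X M1 M2}. Arguments jl {p I X M1 M2}.

(** Vertices of Y_gamma, listed in prec_gamma order: each vertex u of X_alpha
    (in prec_alpha order) contributes u x (a(u)+l) if u prec^A v, u x (a(u)+l-1)
    if v prec^A u, and both v x (a(v)+l), v x (a(v)+l-1) if u = v. *)
Definition Yverts {p} (w : Rn p -> R) (L : list (Rn p)) (v : Rn p) (l : Z)
  : list (RnR p) :=
  flat_map (fun u =>
    if excluded_middle_informative (u = v) then
      [(u, IZR (aZ w u + l)); (u, IZR (aZ w u + l - 1))]
    else if excluded_middle_informative (precA w L u v) then
      [(u, IZR (aZ w u + l))]
    else [(u, IZR (aZ w u + l - 1))]) L.

Definition Yfam {p} {I : Type} (w : Rn p -> R) (X : I -> list (Rn p)) (M1 M2 : Z)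
  (g : Jidx X M1 M2) : list (RnR p) :=
  Yverts w (X (jal g)) (jv g) (jl g).

Definition Omega {p} (w : Rn p -> R) (x : RnR p) : R := w (fst x) + snd x.

From Pilot Require Import Defs.
From Stdlib Require Import Reals List ZArith.
From Stdlib Require Import Lra Lia Classical ClassicalEpsilon FunctionalExtensionality Permutation.
Import ListNotations.
Open Scope R_scope.

(** Points of a simplex [conv L] are described by weight functions
    [f : E -> R] on its duplicate-free vertex list ([coords]); over an
    affinely independent [L] these weights are unique.  A weight function [F]
    on the vertices of [Y_γ], γ = (α, v, l), pushes forward to weights [c] on
    [X_α] by summing over the one or two lifts of each vertex; these are the
    coordinates of the projection of the point to [V], and its height is
    [Σ c(u) a(u) + l - 1 + B(v) + F(v × (a(v) + l))], where [B(u)] is the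
    [c]-mass of the vertices ≺^A-below [u] ([block_weight_height]).

    The key fact ([SpVt_Y]) is that the spanning vertices of a point [(x, t)]
    of [Y_γ] are exactly the lifts [u × (a(u) + k)] with [c(u) > 0] and
    [k - 1 + B(u) < t - Σ c a < k + B(u) + c(u)] ([active]): a condition on
    [x], [t] and [X_α] only, independent of [v] and [l].  With the Λ-complex
    axioms of [X] this yields the axioms for [Y]: (i) and (ii) because
    [active] only sees the face of [X] spanned by [x]; (iii) and (v) because
    [active] is compatible with translations by [Λ] ([active_transport], which
    rests on [precA_shift]); surjectivity in (iv) by choosing [v] with
    [B(v) ≤ t - Σ c a - (l - 1) < B(v) + c(v)] ([mass_partition]); injectivity
    in (iv) because interior heights lie in a window of length [M2 - M1]
    ([Y_interior_height]).  The bound on [Ω] holds at every vertex of [Y_γ]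
    and passes to convex combinations ([Omega_bound]). *)

Definition dec_bool (P : Prop) : bool := if excluded_middle_informative P then true else false.

Lemma dec_bool_true P : dec_bool P = true <-> P.
Proof. unfold dec_bool; destruct excluded_middle_informative; split; intros; auto; discriminate. Qed.

Fixpoint sumL {T} (g : T -> R) (L : list T) : R :=
  match L with [] => 0 | u :: L' => g u + sumL g L' end.

Section SumL.
Context {T : Type}.
Implicit Types (f g : T -> R) (L : list T).

Lemma sumL_app g L1 L2 : sumL g (L1 ++ L2) = sumL g L1 + sumL g L2.
Proof. induction L1; simpl; [lra|rewrite IHL1; lra]. Qed.

Lemma sumL_plus f g L : sumL (fun u => f u + g u) L = sumL f L + sumL g L.
Proof. induction L; simpl; [lra|rewrite IHL; lra]. Qed.

Lemma sumL_minus f g L : sumL (fun u => f u - g u) L = sumL f L - sumL g L.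
Proof. induction L; simpl; [lra|rewrite IHL; lra]. Qed.

Lemma sumL_scal c f L : sumL (fun u => c * f u) L = c * sumL f L.
Proof. induction L; simpl; [lra|rewrite IHL; lra]. Qed.

Lemma sumL_scalr c f L : sumL (fun u => f u * c) L = sumL f L * c.
Proof. induction L; simpl; [lra|rewrite IHL; lra]. Qed.

Lemma sumL_ext f g L : (forall u, In u L -> f u = g u) -> sumL f L = sumL g L.
Proof. induction L; simpl; intros H; auto. rewrite H, IHL; auto. Qed.

Lemma sumL_le f g L : (forall u, In u L -> f u <= g u) -> sumL f L <= sumL g L.
Proof.
  induction L; simpl; intros H; [lra|].
  specialize (IHL (fun u h => H u (or_intror h))). specialize (H a (or_introl eq_refl)). lra.
Qed.

Lemma sumL_zero f L : (forall u, In u L -> f u = 0) -> sumL f L = 0.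
Proof. induction L; simpl; intros H; auto. rewrite H, IHL; auto; lra. Qed.

Lemma sumL_nonneg f L : (forall u, In u L -> 0 <= f u) -> 0 <= sumL f L.
Proof. intros H. rewrite <- (sumL_zero (fun _ => 0) L) by auto. apply sumL_le; auto. Qed.

Lemma sumL_delta L y g : NoDup L -> In y L ->
  sumL (fun u => if excluded_middle_informative (u = y) then g u else 0) L = g y.
Proof.
  induction L as [|a L IH]; simpl; intros ND Hy; [contradiction|]. inversion ND; subst.
  destruct Hy as [<-|Hy].
  - destruct excluded_middle_informative; [|congruence].
    rewrite sumL_zero; [lra|]. intros u Hu. destruct excluded_middle_informative; subst; [contradiction|auto].
  - destruct excluded_middle_informative; [subst; contradiction|]. rewrite IH; auto; lra.
Qed.

Lemma sumL_perm g L1 L2 : Permutation L1 L2 -> sumL g L1 = sumL g L2.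
Proof. induction 1; simpl; lra. Qed.

Lemma sumL_filter g L (P : T -> Prop) : (forall u, In u L -> ~ P u -> g u = 0) ->
  sumL g L = sumL g (filter (fun u => dec_bool (P u)) L).
Proof.
  induction L; simpl; intros H; auto. unfold dec_bool at 1. destruct excluded_middle_informative.
  - simpl. rewrite IHL; auto.
  - rewrite H, IHL; auto; lra.
Qed.

Lemma sumL_support g L1 L2 : NoDup L1 -> NoDup L2 ->
  (forall u, In u L1 -> ~ In u L2 -> g u = 0) -> (forall u, In u L2 -> ~ In u L1 -> g u = 0) ->
  sumL g L1 = sumL g L2.
Proof.
  intros N1 N2 H1 H2. rewrite (sumL_filter g L1 (fun u => In u L2)), (sumL_filter g L2 (fun u => In u L1)); auto.
  apply sumL_perm, NoDup_Permutation; try apply NoDup_filter; auto.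
  intros x; rewrite !filter_In, !dec_bool_true; tauto.
Qed.
End SumL.

Lemma sumL_map {T U} (g : T -> R) (phi : U -> T) L : sumL g (map phi L) = sumL (fun u => g (phi u)) L.
Proof. induction L; simpl; auto; rewrite IHL; auto. Qed.

Lemma sumL_flat_map {T U} (g : T -> R) (h : U -> list T) L :
  sumL g (flat_map h L) = sumL (fun u => sumL g (h u)) L.
Proof. induction L; simpl; auto. rewrite sumL_app, IHL; auto. Qed.

Lemma sumR_map {T} (f : T -> R) L : sumR (map f L) = sumL f L.
Proof. induction L; simpl; auto. unfold sumR in *; simpl; rewrite IHL; auto. Qed.

Lemma sumL_transport {T U} (L : list T) (L' : list U) (c : T -> R) (c' : U -> R) (phi : T -> U) :
  NoDup L -> NoDup L' -> (forall u v, phi u = phi v -> u = v) ->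
  (forall u, In u L -> 0 <= c u) -> (forall y, In y L' -> 0 <= c' y) ->
  (forall u, In u L -> 0 < c u -> In (phi u) L' /\ c' (phi u) = c u) ->
  (forall y, In y L' -> 0 < c' y -> exists u, In u L /\ y = phi u /\ 0 < c u) ->
  forall G, sumL (fun y => c' y * G y) L' = sumL (fun u => c u * G (phi u)) L.
Proof.
  intros N1 N2 Hinj Hc Hc' Hfwd Hback G.
  set (k := fun y => if excluded_middle_informative (In y L') then c' y * G y else 0).
  rewrite (sumL_ext _ k) by (intros y Hy; unfold k; destruct excluded_middle_informative; tauto).
  rewrite (sumL_ext (fun u => c u * G (phi u)) (fun u => k (phi u))).
  - rewrite <- (sumL_map k phi L). apply sumL_support; auto.
    + apply FinFun.Injective_map_NoDup; auto.
    + intros y Hy Hn. unfold k. destruct excluded_middle_informative; [|tauto].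
      destruct (Rle_lt_or_eq_dec _ _ (Hc' y Hy)) as [Hp|Hp].
      * destruct (Hback y Hy Hp) as (u & Hu & -> & _). exfalso; apply Hn, in_map, Hu.
      * rewrite <- Hp; ring.
    + intros y Hy Hn. unfold k. destruct excluded_middle_informative; tauto.
  - intros u Hu. unfold k. destruct (Rle_lt_or_eq_dec _ _ (Hc u Hu)) as [Hp|Hp].
    + destruct (Hfwd u Hu Hp) as [Hin Heq]. destruct excluded_middle_informative; [|tauto]. rewrite Heq; auto.
    + rewrite <- Hp. destruct excluded_middle_informative; [|ring].
      destruct (Rle_lt_or_eq_dec _ _ (Hc' (phi u) i)) as [Hq|Hq].
      * destruct (Hback _ i Hq) as (u' & Hu' & E & Hpos). apply Hinj in E. subst u'. lra.
      * rewrite <- Hq; ring.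
Qed.

Lemma ex_min {T} (Rl : T -> T -> Prop) (L : list T) (P : T -> Prop) :
  (forall x, ~ Rl x x) -> (forall x y z, Rl x y -> Rl y z -> Rl x z) ->
  (exists x, In x L /\ P x) -> exists m, In m L /\ P m /\ forall x, In x L -> P x -> ~ Rl x m.
Proof.
  intros Hirr Htr. induction L as [|a L IH]; intros (x & Hx & Px); [contradiction|].
  destruct (classic (exists x, In x L /\ P x)) as [He|Hne].
  - destruct (IH He) as (m & Hm & Pm & Hmin).
    destruct (classic (P a /\ Rl a m)) as [[Pa Ram]|Hn].
    + exists a. split; [simpl; auto|split; auto]. intros y [Hy|Hy] Py Hya.
      * subst y. apply (Hirr a); auto.
      * apply (Hmin y Hy Py). eapply Htr; eauto.
    + exists m. split; [simpl; auto|split; auto]. intros y [Hy|Hy] Py; auto.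
      subst y. intros Hym; apply Hn; auto.
  - exists a. destruct Hx as [Hx|Hx]; [subst x|exfalso; apply Hne; eauto].
    split; [simpl; auto|split; auto]. intros y [Hy|Hy] Py; [subst; apply Hirr|].
    exfalso; apply Hne; eauto.
Qed.

Section Prec.
Variable E : RVS.
Implicit Types (L : list E).

Lemma nth_error_NoDup_inj L i j x : NoDup L -> nth_error L i = Some x -> nth_error L j = Some x -> i = j.
Proof.
  intros ND Hi Hj. eapply (proj1 (NoDup_nth_error L)); eauto.
  apply nth_error_Some; congruence. congruence.
Qed.

Lemma prec_In L a b : prec L a b -> In a L /\ In b L.
Proof. intros (i&j&_&Hi&Hj). split; eapply nth_error_In; eauto. Qed.

Lemma prec_irrefl L a : NoDup L -> ~ prec L a a.
Proof. intros ND (i&j&Hij&Hi&Hj). assert (i = j) by (eapply nth_error_NoDup_inj; eauto). lia. Qed.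

Lemma prec_trans L a b c : NoDup L -> prec L a b -> prec L b c -> prec L a c.
Proof.
  intros ND (i&j&Hij&Hi&Hj) (j'&k&Hjk&Hj'&Hk).
  assert (j = j') by (eapply nth_error_NoDup_inj; eauto). subst. exists i, k; repeat split; auto; lia.
Qed.

Lemma prec_total L a b : In a L -> In b L -> a <> b -> prec L a b \/ prec L b a.
Proof.
  intros Ha Hb Hne. apply In_nth_error in Ha as [i Hi]. apply In_nth_error in Hb as [j Hj].
  destruct (Nat.lt_trichotomy i j) as [H|[H|H]].
  - left; exists i, j; auto.
  - subst; congruence.
  - right; exists j, i; auto.
Qed.

Lemma prec_cons u L a b : prec (u :: L) a b <-> (a = u /\ In b L) \/ prec L a b.
Proof.
  split.
  - intros (i&j&Hij&Hi&Hj). destruct j; [lia|]. simpl in Hj. destruct i.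
    + simpl in Hi. left; split; [congruence|]. eapply nth_error_In; eauto.
    + right. exists i, j; simpl in Hi; repeat split; auto; lia.
  - intros [[-> Hb]|(i&j&Hij&Hi&Hj)].
    + apply In_nth_error in Hb as [j Hj]. exists 0%nat, (S j); simpl; repeat split; auto; lia.
    + exists (S i), (S j); simpl; repeat split; auto; lia.
Qed.

Lemma prec_app L1 L2 a b : prec (L1 ++ L2) a b <-> prec L1 a b \/ prec L2 a b \/ (In a L1 /\ In b L2).
Proof.
  induction L1 as [|u L1 IH]; simpl.
  - split; [tauto|]. intros [(i&j&_&Hi&_)|[H|[[] _]]]; auto. destruct i; discriminate.
  - rewrite !prec_cons, IH, in_app_iff. split.
    + intros [[-> [H|H]]|[H|[H|[H1 H2]]]]; tauto.
    + intros [[[-> H]|H]|[H|[[H1|H1] H2]]]; try tauto. subst; tauto.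
Qed.
End Prec.
Arguments prec_In {E}. Arguments prec_irrefl {E}. Arguments prec_trans {E}.
Arguments prec_total {E}. Arguments prec_cons {E}. Arguments prec_app {E}.

Lemma prec_flat_map {T U : RVS} (g : U -> list T) (L : list U) n n' :
  prec (flat_map g L) n n' <->
  (exists u, In u L /\ prec (g u) n n') \/ (exists u u', prec L u u' /\ In n (g u) /\ In n' (g u')).
Proof.
  induction L as [|u L IH].
  - simpl. split; [intros (i&j&_&Hi&_); destruct i; discriminate|].
    intros [(u&[]&_)|(u&u'&(i&j&_&Hi&_)&_)]; destruct i; discriminate.
  - change (flat_map g (u :: L)) with (g u ++ flat_map g L). rewrite prec_app, IH. split.
    + intros [H|[[(u1&Hu1&H)|(u1&u2&H1&H2&H3)]|(H1&H2)]].
      * left; exists u; simpl; auto.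
      * left; exists u1; simpl; auto.
      * right; exists u1, u2; rewrite prec_cons; auto.
      * apply in_flat_map in H2 as (u2&Hu2&H2). right; exists u, u2; rewrite prec_cons; auto.
    + intros [(u1&[<-|Hu1]&H)|(u1&u2&H1&H2&H3)]; auto.
      * right; left; left; exists u1; auto.
      * rewrite prec_cons in H1. destruct H1 as [[-> Hu2]|H1].
        -- right; right; split; auto. apply in_flat_map; eauto.
        -- right; left; right; exists u1, u2; auto.
Qed.

Lemma lc_Rn p (f : Rn p -> R) (L : list (Rn p)) :
  lc (Rn p) (map f L) L = (fun i => sumL (fun u : Rn p => f u * u i) L).
Proof.
  induction L as [|a L IH]; [reflexivity|].
  transitivity (vadd (Rn p) (vscale (Rn p) (f a) a) (lc (Rn p) (map f L) L)); [reflexivity|].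
  rewrite IH. reflexivity.
Qed.

Lemma lc_map_Rn p (S : list (Rn p)) c (phi : Rn p -> Rn p) :
  lc (Rn p) (map c S) (map phi S) = fun i => sumL (fun u => c u * phi u i) S.
Proof.
  induction S as [|a S IH]; [reflexivity|].
  transitivity (vadd (Rn p) (vscale (Rn p) (c a) (phi a)) (lc (Rn p) (map c S) (map phi S))); [reflexivity|].
  rewrite IH. reflexivity.
Qed.

Lemma lc_RnR p (F : RnR p -> R) (L : list (RnR p)) :
  lc (RnR p) (map F L) L =
  ((fun i => sumL (fun n : RnR p => F n * fst n i) L), sumL (fun n : RnR p => F n * snd n) L).
Proof.
  induction L as [|a L IH]; [reflexivity|].
  transitivity (vadd (RnR p) (vscale (RnR p) (F a) a) (lc (RnR p) (map F L) L)); [reflexivity|].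
  rewrite IH. reflexivity.
Qed.

(** The weight function attached to a coefficient list (first occurrence wins). *)
Fixpoint weight_of {T} (L : list T) (cs : list R) : T -> R :=
  match L, cs with
  | u :: L', c :: cs' => fun y => if excluded_middle_informative (y = u) then c else weight_of L' cs' y
  | _, _ => fun _ => 0
  end.

Lemma weight_of_map {T} (L : list T) cs : NoDup L -> length cs = length L -> map (weight_of L cs) L = cs.
Proof.
  revert cs; induction L as [|u L IH]; intros [|c cs] ND Hl; simpl in *; try discriminate; auto.
  inversion ND; subst. destruct excluded_middle_informative; [|congruence]. f_equal.
  transitivity (map (weight_of L cs) L); [|apply IH; auto].
  apply map_ext_in. intros a Ha. destruct excluded_middle_informative; subst; tauto.
Qed.

Section Coords.
Variable E : RVS.

Definition coords (L : list E) (f : E -> R) (x : E) : Prop :=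
  (forall u, In u L -> 0 <= f u) /\ sumL f L = 1 /\ x = lc E (map f L) L.

Lemma coords_conv L f x : coords L f x -> conv L x.
Proof.
  intros (Hpos & Hs & Hx). exists (map f L). repeat split; auto.
  - apply length_map.
  - apply Forall_forall. intros c Hc. apply in_map_iff in Hc as (u & <- & Hu); auto.
  - rewrite sumR_map; auto.
Qed.

Lemma conv_coords L x : NoDup L -> conv L x -> exists f, coords L f x.
Proof.
  intros ND [cs (Hl & Hpos & Hs & Hx)]. exists (weight_of L cs).
  rewrite <- (weight_of_map L cs) in Hpos, Hs, Hx; auto. repeat split; auto.
  - intros u Hu. rewrite Forall_forall in Hpos. apply Hpos, in_map; auto.
  - rewrite <- sumR_map; auto.
Qed.

Lemma SpVt_coords L x w : NoDup L -> SpVt L x w <-> exists f, coords L f x /\ In w L /\ 0 < f w.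
Proof.
  intros ND; split.
  - intros (cs & i & c & (Hl & Hpos & Hs & Hx) & Hw & Hc & Hcp).
    exists (weight_of L cs). rewrite <- (weight_of_map L cs) in Hpos, Hs, Hx, Hc; auto.
    repeat split; auto.
    + intros u Hu. rewrite Forall_forall in Hpos. apply Hpos, in_map; auto.
    + rewrite <- sumR_map; auto.
    + eapply nth_error_In; eauto.
    + rewrite nth_error_map, Hw in Hc. simpl in Hc. congruence.
  - intros (f & (Hpos & Hs & Hx) & Hw & Hf). apply In_nth_error in Hw as [i Hi].
    exists (map f L), i, (f w). repeat split; auto.
    + apply length_map.
    + apply Forall_forall. intros c Hc. apply in_map_iff in Hc as (u & <- & Hu); auto.
    + rewrite sumR_map; auto.
    + rewrite nth_error_map, Hi; auto.
Qed.

Lemma SpVt_In (L : list E) x n : SpVt L x n -> In n L.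
Proof. intros (cs & i & c & _ & Hn & _). eapply nth_error_In; eauto. Qed.
End Coords.
Arguments coords {E}. Arguments coords_conv {E}. Arguments conv_coords {E}. Arguments SpVt_coords {E}.
Arguments SpVt_In {E}.

Lemma coords_unique p (L : list (Rn p)) f g x : aff_indep (Rn p) L ->
  coords L f x -> coords L g x -> forall u, In u L -> f u = g u.
Proof.
  intros AI (_ & Hf & Hx) (_ & Hg & Hx') u Hu.
  specialize (AI (map (fun u => f u - g u) L)). rewrite length_map in AI.
  assert (H : Forall (fun c => c = 0) (map (fun u => f u - g u) L)).
  { apply AI; auto.
    - rewrite sumR_map, sumL_minus; lra.
    - rewrite lc_Rn. rewrite lc_Rn in Hx, Hx'. simpl. apply functional_extensionality; intros i.
      rewrite (sumL_ext _ (fun u => f u * u i - g u * u i)) by (intros; ring).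
      rewrite sumL_minus.
      assert (E1 : x i = sumL (fun u : Rn p => f u * u i) L) by (rewrite Hx; reflexivity).
      assert (E2 : x i = sumL (fun u : Rn p => g u * u i) L) by (rewrite Hx'; reflexivity). lra. }
  rewrite Forall_forall in H. specialize (H (f u - g u) (in_map _ _ _ Hu)). lra.
Qed.

Lemma SpVt_by_coords p (L : list (Rn p)) b c u : NoDup L -> aff_indep (Rn p) L -> coords L c b ->
  (SpVt L b u <-> In u L /\ 0 < c u).
Proof.
  intros ND AI Hc. rewrite (SpVt_coords _ _ _ ND). split.
  - intros (f & Hf & Hu & Hfu). split; auto. rewrite <- (coords_unique p L _ _ _ AI Hf Hc u Hu). auto.
  - intros (Hu & Hcu). exists c; auto.
Qed.

Fixpoint face_weight {T} (L0 : list T) (cs : list R) : T -> R :=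
  match L0, cs with
  | y :: L0', c :: cs' => fun u => (if excluded_middle_informative (u = y) then c else 0) + face_weight L0' cs' u
  | _, _ => fun _ => 0
  end.

Fixpoint sum_coeff {T} (cs : list R) (L0 : list T) (G : T -> R) : R :=
  match cs, L0 with c :: cs', y :: L0' => c * G y + sum_coeff cs' L0' G | _, _ => 0 end.

Lemma face_weight_sum {T} (L0 L : list T) cs (G : T -> R) : NoDup L -> (forall y, In y L0 -> In y L) ->
  sumL (fun u => face_weight L0 cs u * G u) L = sum_coeff cs L0 G.
Proof.
  revert cs; induction L0 as [|y L0 IH]; intros [|c cs] ND Hsub; simpl; try (apply sumL_zero; intros; lra).
  rewrite (sumL_ext _ (fun u => (if excluded_middle_informative (u = y) then c * G u else 0)
                                + face_weight L0 cs u * G u)).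
  2:{ intros u _. destruct excluded_middle_informative; lra. }
  rewrite sumL_plus, sumL_delta, IH; auto; [intros; apply Hsub; simpl; auto|apply Hsub; simpl; auto].
Qed.

Lemma face_weight_nonneg {T} (L0 : list T) cs u : Forall (fun c => 0 <= c) cs -> 0 <= face_weight L0 cs u.
Proof.
  revert cs; induction L0; intros [|c cs] H; simpl; try lra. inversion H; subst.
  specialize (IHL0 cs H3). destruct excluded_middle_informative; lra.
Qed.

Lemma face_weight_out {T} (L0 : list T) cs u : ~ In u L0 -> face_weight L0 cs u = 0.
Proof.
  revert cs; induction L0; intros [|c cs] H; simpl; try lra. simpl in H.
  destruct excluded_middle_informative; [subst; tauto|]. rewrite IHL0; auto; lra.
Qed.

Lemma face_weight_map {T} (S : list T) c (phi : T -> T) u :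
  NoDup S -> (forall a b, phi a = phi b -> a = b) -> In u S -> face_weight (map phi S) (map c S) (phi u) = c u.
Proof.
  induction S as [|s S IH]; intros ND Hinj Hu; [contradiction|]. inversion ND; subst. simpl.
  destruct Hu as [<-|Hu].
  - destruct excluded_middle_informative; [|congruence]. rewrite face_weight_out; [ring|].
    intros Hin. apply in_map_iff in Hin as (y & Ey & Hy). apply Hinj in Ey. subst; contradiction.
  - destruct excluded_middle_informative as [E|E]. apply Hinj in E; subst; contradiction.
    rewrite Rplus_0_l. apply IH; auto.
Qed.

Lemma sum_coeff_one {T} cs (L0 : list T) : length cs = length L0 -> sum_coeff cs L0 (fun _ => 1) = sumR cs.
Proof.
  revert L0; induction cs; intros [|y L0] H; simpl in *; try discriminate; auto.
  unfold sumR in *; simpl. rewrite IHcs; [lra|lia].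
Qed.

Lemma sum_coeff_Rn p cs (L0 : list (Rn p)) i : sum_coeff cs L0 (fun y => y i) = lc (Rn p) cs L0 i.
Proof. revert L0; induction cs; intros [|y L0]; simpl; auto. rewrite IHcs; auto. Qed.

Lemma sum_coeff_RnR_fst p cs (L0 : list (RnR p)) i : sum_coeff cs L0 (fun y => fst y i) = fst (lc (RnR p) cs L0) i.
Proof. revert L0; induction cs; intros [|y L0]; simpl; auto. rewrite IHcs; auto. Qed.

Lemma sum_coeff_RnR_snd p cs (L0 : list (RnR p)) : sum_coeff cs L0 snd = snd (lc (RnR p) cs L0).
Proof. revert L0; induction cs; intros [|y L0]; simpl; auto. rewrite IHcs; auto. Qed.

Lemma face_coords_Rn p (L0 L : list (Rn p)) cs x : NoDup L -> (forall y, In y L0 -> In y L) ->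
  bary (Rn p) L0 cs x -> coords L (face_weight L0 cs) x.
Proof.
  intros ND Hsub (Hl & Hpos & Hs & Hx). split; [|split].
  - intros; apply face_weight_nonneg; auto.
  - rewrite (sumL_ext _ (fun u => face_weight L0 cs u * 1)) by (intros; lra).
    rewrite face_weight_sum, sum_coeff_one; auto.
  - rewrite lc_Rn. subst x. apply functional_extensionality; intros i.
    rewrite face_weight_sum, sum_coeff_Rn; auto.
Qed.

Lemma conv_face_RnR p (L0 L : list (RnR p)) x : NoDup L -> (forall y, In y L0 -> In y L) -> conv L0 x ->
  conv L x.
Proof.
  intros ND Hsub [cs (Hl & Hpos & Hs & Hx)]. apply coords_conv with (f := face_weight L0 cs). split; [|split].
  - intros; apply face_weight_nonneg; auto.
  - rewrite (sumL_ext _ (fun u => face_weight L0 cs u * 1)) by (intros; lra).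
    rewrite face_weight_sum, sum_coeff_one; auto.
  - rewrite lc_RnR. subst x. destruct (lc (RnR p) cs L0) as [x1 x2] eqn:E0. f_equal.
    + apply functional_extensionality; intros i. rewrite face_weight_sum, sum_coeff_RnR_fst, E0; auto.
    + rewrite face_weight_sum, sum_coeff_RnR_snd, E0; auto.
Qed.

Lemma Z_le_of_IZR_lt_succ (a b : Z) : IZR a < IZR b + 1 -> (a <= b)%Z.
Proof. intros H. assert (Hs : IZR a < IZR (b + 1)) by (rewrite plus_IZR; simpl; lra). apply lt_IZR in Hs; lia. Qed.

Lemma Z_ge_of_IZR_pred_lt (a b : Z) : IZR b - 1 < IZR a -> (b <= a)%Z.
Proof. intros H. assert (Hs : IZR (b - 1) < IZR a) by (rewrite minus_IZR; simpl; lra). apply lt_IZR in Hs; lia. Qed.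

Lemma AR_bounds {p} (w : Rn p -> R) u : 0 < AR w u <= 1.
Proof. unfold AR, aZ. destruct (archimed (- w u)). lra. Qed.

Section PrecA.
Variables (p : nat) (w : Rn p -> R) (L : list (Rn p)).
Hypothesis ND : NoDup L.

Lemma precA_irrefl u : ~ precA w L u u.
Proof. intros [H|[_ H]]; [lra|]. eapply prec_irrefl; eauto. Qed.

Lemma precA_trans a b d : precA w L a b -> precA w L b d -> precA w L a d.
Proof.
  intros [H1|[H1 H1']] [H2|[H2 H2']]; unfold precA;
    first [left; lra | right; split; [lra|eapply prec_trans; eauto]].
Qed.
End PrecA.
Arguments precA_irrefl {p w L}. Arguments precA_trans {p w L}.

Lemma precA_total {p} (w : Rn p -> R) L a b : In a L -> In b L -> a <> b -> precA w L a b \/ precA w L b a.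
Proof.
  intros Ha Hb Hne. unfold precA. destruct (Rtotal_order (AR w a) (AR w b)) as [H|[H|H]].
  - left; left; auto.
  - destruct (prec_total L a b) as [H'|H']; auto.
  - right; left; auto.
Qed.

(** ** The vertices of the lifted simplex [Y_γ] *)

Section Lift.
Variables (p : nat) (w : Rn p -> R).
Implicit Types (L : list (Rn p)) (u v : Rn p).

Definition top_lift u (l : Z) : RnR p := (u, IZR (aZ w u + l)).
Definition bot_lift u (l : Z) : RnR p := (u, IZR (aZ w u + l - 1)).

Lemma top_ne_bot u l : top_lift u l <> bot_lift u l.
Proof. unfold top_lift, bot_lift. intros H. inversion H as [Hk]. apply eq_IZR in Hk. lia. Qed.

Definition block L v l u : list (RnR p) :=
  if excluded_middle_informative (u = v) then [top_lift u l; bot_lift u l]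
  else if excluded_middle_informative (precA w L u v) then [top_lift u l]
  else [bot_lift u l].

Lemma Yverts_blocks L v l : Yverts w L v l = flat_map (block L v l) L.
Proof. reflexivity. Qed.

Lemma block_fst L v l u n : In n (block L v l u) -> fst n = u.
Proof. unfold block, top_lift, bot_lift. repeat destruct excluded_middle_informative; simpl; intuition; subst; auto. Qed.

Lemma In_Y L v l n : In n (Yverts w L v l) <-> exists u, In u L /\ In n (block L v l u).
Proof. rewrite Yverts_blocks, in_flat_map. tauto. Qed.

Lemma In_Y_fst L v l n : In n (Yverts w L v l) -> In (fst n) L.
Proof. intros H. apply In_Y in H as (u & Hu & Hn). rewrite (block_fst _ _ _ _ _ Hn). auto. Qed.

Lemma In_Y_form L v l n : In n (Yverts w L v l) ->
  exists u k, In u L /\ n = (u, IZR (aZ w u + k)) /\ (k = l \/ k = l - 1)%Z.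
Proof.
  intros H. apply In_Y in H as (u & Hu & Hn). exists u.
  assert (Hbot : bot_lift u l = (u, IZR (aZ w u + (l - 1))))
    by (unfold bot_lift; now replace (aZ w u + (l - 1))%Z with (aZ w u + l - 1)%Z by lia).
  unfold block in Hn. repeat destruct excluded_middle_informative; simpl in Hn;
    repeat destruct Hn as [Hn|Hn]; try contradiction; subst;
    first [ exists l; split; [auto|split; [reflexivity|left; reflexivity]]
          | exists (l - 1)%Z; split; [auto|split; [exact Hbot|right; reflexivity]] ].
Qed.

Lemma In_Y_lift L v l u k : In u L ->
  (In (u, IZR (aZ w u + k)) (Yverts w L v l) <->
   (k = l /\ (u = v \/ precA w L u v)) \/ (k = (l - 1)%Z /\ (u = v \/ ~ precA w L u v))).
Proof.
  intros Hu. rewrite In_Y. split.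
  - intros (u' & Hu' & Hn). assert (u' = u) by (apply block_fst in Hn; auto). subst u'.
    unfold block, top_lift, bot_lift in Hn.
    destruct (excluded_middle_informative (u = v)) as [E1|E1].
    + simpl in Hn. destruct Hn as [Hn|[Hn|[]]]; inversion Hn as [Hk]; apply eq_IZR in Hk.
      * left; split; [lia|tauto].
      * right; split; [lia|tauto].
    + destruct (excluded_middle_informative (precA w L u v)) as [E2|E2]; simpl in Hn;
        destruct Hn as [Hn|[]]; inversion Hn as [Hk]; apply eq_IZR in Hk.
      * left; split; [lia|tauto].
      * right; split; [lia|tauto].
  - intros H. exists u; split; auto. unfold block, top_lift, bot_lift.
    destruct H as [[-> H]|[-> H]]; repeat destruct excluded_middle_informative; simpl; try tauto;
      repeat f_equal; try lia.
    all: replace (aZ w u + (l - 1))%Z with (aZ w u + l - 1)%Z by lia; tauto.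
Qed.

Lemma NoDup_blocks L0 v l L : NoDup L -> NoDup (flat_map (block L0 v l) L).
Proof.
  intros ND. induction L as [|u L IH]; simpl; [constructor|]. inversion ND; subst.
  apply NoDup_app.
  - unfold block. repeat destruct excluded_middle_informative; repeat constructor; simpl; intuition.
    apply (top_ne_bot u l); auto.
  - apply IH; auto.
  - intros n Hn1 Hn2. apply in_flat_map in Hn2 as (u' & Hu' & Hn2).
    apply block_fst in Hn1. apply block_fst in Hn2. assert (u = u') by congruence. subst; contradiction.
Qed.

Lemma NoDup_Y L v l : NoDup L -> NoDup (Yverts w L v l).
Proof. intros; apply NoDup_blocks; auto. Qed.

Lemma length_blocks_out L0 v l L : NoDup L -> ~ In v L -> length (flat_map (block L0 v l) L) = length L.
Proof.
  induction L as [|u L IH]; intros ND Hv; [reflexivity|]. inversion ND; subst.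
  change (flat_map (block L0 v l) (u :: L)) with (block L0 v l u ++ flat_map (block L0 v l) L).
  simpl in Hv. rewrite length_app, IH by tauto. unfold block at 1.
  destruct excluded_middle_informative; [subst; tauto|].
  destruct excluded_middle_informative; simpl; auto.
Qed.

Lemma length_blocks_in L0 v l L : NoDup L -> In v L -> length (flat_map (block L0 v l) L) = S (length L).
Proof.
  induction L as [|u L IH]; intros ND Hv; [contradiction|]. inversion ND; subst.
  change (flat_map (block L0 v l) (u :: L)) with (block L0 v l u ++ flat_map (block L0 v l) L).
  simpl in Hv. rewrite length_app. destruct Hv as [<-|Hv].
  - rewrite length_blocks_out; auto. unfold block at 1. destruct excluded_middle_informative; [|congruence]. reflexivity.
  - rewrite IH; auto. unfold block at 1. destruct excluded_middle_informative; [subst; contradiction|].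
    destruct excluded_middle_informative; simpl; auto.
Qed.

Lemma prec_Y L v l n n' : NoDup L ->
  prec (Yverts w L v l) n n' <->
  In n (Yverts w L v l) /\ In n' (Yverts w L v l) /\
  (prec L (fst n) (fst n') \/ (fst n = fst n' /\ snd n' < snd n)).
Proof.
  intros ND. split.
  - intros H. assert (HI := prec_In _ _ _ H). split; [tauto|split; [tauto|]].
    rewrite Yverts_blocks, prec_flat_map in H. destruct H as [(u&Hu&H)|(u&u'&H1&H2&H3)].
    + unfold block in H. destruct excluded_middle_informative.
      * rewrite prec_cons in H. destruct H as [[-> [H|[]]]|H].
        -- subst. right. unfold top_lift, bot_lift; simpl. split; auto. rewrite minus_IZR. lra.
        -- rewrite prec_cons in H. destruct H as [[_ []]|(i&j&_&Hi&_)]. destruct i; discriminate.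
      * destruct excluded_middle_informative; rewrite prec_cons in H;
          (destruct H as [[_ []]|(i&j&_&Hi&_)]; destruct i; discriminate).
    + left. rewrite (block_fst _ _ _ _ _ H2), (block_fst _ _ _ _ _ H3). auto.
  - intros (H1 & H2 & H3). rewrite Yverts_blocks, prec_flat_map.
    rewrite In_Y in H1, H2. destruct H1 as (u & Hu & H1). destruct H2 as (u' & Hu' & H2).
    assert (E1 := block_fst _ _ _ _ _ H1). assert (E2 := block_fst _ _ _ _ _ H2).
    destruct H3 as [H3|[H3 H4]].
    + right. exists u, u'. subst u u'. auto.
    + left. exists u. split; auto. assert (Hu'u : u' = u) by congruence. rewrite Hu'u in H2.
      unfold block in *. destruct excluded_middle_informative.
      * simpl in H1, H2. destruct H1 as [H1|[H1|[]]]; destruct H2 as [H2|[H2|[]]]; subst;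
          unfold top_lift, bot_lift in H4; simpl in H4; rewrite ?minus_IZR in H4; try lra.
        apply prec_cons. left; split; auto. simpl; auto.
      * destruct excluded_middle_informative; simpl in H1, H2;
          destruct H1 as [H1|[]]; destruct H2 as [H2|[]]; subst; lra.
Qed.

Definition block_weight L v l (F : RnR p -> R) u : R := sumL F (block L v l u).

Lemma block_weight_sum L v l F : sumL F (Yverts w L v l) = sumL (block_weight L v l F) L.
Proof. rewrite Yverts_blocks, sumL_flat_map. reflexivity. Qed.

Lemma block_weight_base L v l F :
  fst (lc (RnR p) (map F (Yverts w L v l)) (Yverts w L v l)) = lc (Rn p) (map (block_weight L v l F) L) L.
Proof.
  rewrite lc_RnR, lc_Rn. simpl. apply functional_extensionality; intros i.
  rewrite Yverts_blocks, sumL_flat_map. apply sumL_ext. intros u Hu. unfold block_weight.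
  rewrite <- sumL_scalr. apply sumL_ext. intros n Hn. rewrite (block_fst _ _ _ _ _ Hn). auto.
Qed.

(** [Y_γ] is a [(p+1)]-simplex: an affine dependency pushes forward to one of
    [X_α], so it vanishes on every block; on the block of [v] the heights of
    the two lifts differ, which kills the remaining freedom. *)
Lemma aff_indep_Y L v l : NoDup L -> In v L -> aff_indep (Rn p) L -> aff_indep (RnR p) (Yverts w L v l).
Proof.
  intros ND Hv AI cs Hl Hs Hz. set (Y := Yverts w L v l) in *.
  set (G := weight_of Y cs). assert (HG : map G Y = cs) by (apply weight_of_map; auto; apply NoDup_Y, ND).
  rewrite <- HG in Hs, Hz |- *. rewrite sumR_map in Hs.
  assert (Hblock : forall u, In u L -> block_weight L v l G u = 0).
  { assert (H : Forall (fun c => c = 0) (map (block_weight L v l G) L)).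
    { apply AI; [apply length_map| |].
      - rewrite sumR_map, <- block_weight_sum. exact Hs.
      - rewrite <- block_weight_base. fold Y. rewrite Hz. reflexivity. }
    rewrite Forall_forall in H. intros u Hu. apply H, in_map, Hu. }
  assert (Hother : forall u, In u L -> u <> v -> forall n, In n (block L v l u) -> G n = 0).
  { intros u Hu Huv n Hn. specialize (Hblock u Hu). unfold block_weight, block in Hblock, Hn.
    destruct excluded_middle_informative; [contradiction|].
    destruct excluded_middle_informative; simpl in Hblock, Hn; destruct Hn as [<-|[]]; lra. }
  assert (Hheight : sumL (fun n => G n * snd n) Y =
                    G (top_lift v l) * snd (top_lift v l) + G (bot_lift v l) * snd (bot_lift v l)).
  { unfold Y. rewrite Yverts_blocks, sumL_flat_map.
    rewrite (sumL_ext _ (fun u => if excluded_middle_informative (u = v) then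
       G (top_lift u l) * snd (top_lift u l) + G (bot_lift u l) * snd (bot_lift u l) else 0)).
    - apply (sumL_delta L v (fun u => G (top_lift u l) * snd (top_lift u l) + G (bot_lift u l) * snd (bot_lift u l))); auto.
    - intros u Hu. destruct excluded_middle_informative as [->|Hne].
      + unfold block. destruct excluded_middle_informative; [|congruence]. simpl. ring.
      + apply sumL_zero. intros n Hn. rewrite (Hother u Hu Hne n Hn). ring. }
  assert (Hv0 := Hblock v Hv). unfold block_weight, block in Hv0.
  destruct excluded_middle_informative; [|congruence]. simpl in Hv0.
  assert (Hz2 : sumL (fun n : RnR p => G n * snd n) Y = 0) by (rewrite lc_RnR in Hz; injection Hz as _ H; exact H).
  rewrite Hz2 in Hheight.
  set (a := G (top_lift v l)) in *. set (b := G (bot_lift v l)) in *.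
  assert (Hab : a * IZR (aZ w v + l) + b * IZR (aZ w v + l - 1) = 0) by (symmetry; exact Hheight).
  rewrite minus_IZR in Hab. replace b with (- a) in Hab by lra.
  assert (Htop : a = 0) by (ring_simplify in Hab; lra).
  assert (Hbot : b = 0) by lra.
  apply Forall_forall. intros c Hc. apply in_map_iff in Hc as (n & <- & Hn).
  apply In_Y in Hn as (u & Hu & Hn).
  destruct (excluded_middle_informative (u = v)) as [->|Hne].
  - unfold block in Hn. destruct excluded_middle_informative; [|congruence]. simpl in Hn.
    destruct Hn as [<-|[<-|[]]]; auto.
  - apply (Hother u Hu Hne n Hn).
Qed.
End Lift.

(** ** Heights and spanning vertices of points of [Y_γ] *)

Section Heights.
Variables (p : nat) (w : Rn p -> R).
Implicit Types (L : list (Rn p)) (u v : Rn p) (c : Rn p -> R).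

Definition mass_below L c u : R :=
  sumL (fun u' => if excluded_middle_informative (precA w L u' u) then c u' else 0) L.

Definition base_height L c : R := sumL (fun u => c u * IZR (aZ w u)) L.

(** The lift [u × (a(u) + k)] is active at height [t] over the point with
    coordinates [c]; this characterises spanning vertices ([SpVt_Y]). *)
Definition active L c (t : R) u (k : Z) : Prop :=
  0 < c u /\ IZR k - 1 + mass_below L c u < t - base_height L c < IZR k + mass_below L c u + c u.

Lemma mass_below_ext L c c' u : (forall u, In u L -> c u = c' u) -> mass_below L c u = mass_below L c' u.
Proof. intros H. apply sumL_ext. intros; rewrite H; auto. Qed.

Lemma base_height_ext L c c' : (forall u, In u L -> c u = c' u) -> base_height L c = base_height L c'.
Proof. intros H. apply sumL_ext. intros; rewrite H; auto. Qed.

Lemma active_ext L c c' t u k : (forall u, In u L -> c u = c' u) -> In u L ->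
  (active L c t u k <-> active L c' t u k).
Proof. intros H Hu. unfold active. rewrite H, (mass_below_ext L c c'), (base_height_ext L c c') by auto. tauto. Qed.

Section Mass.
Variables (L : list (Rn p)) (c : Rn p -> R).
Hypothesis ND : NoDup L.
Hypothesis Hc : forall u, In u L -> 0 <= c u.

Lemma mass_below_nonneg u : 0 <= mass_below L c u.
Proof. apply sumL_nonneg. intros; destruct excluded_middle_informative; auto; lra. Qed.

Lemma mass_below_lt u v : In u L -> precA w L u v -> mass_below L c u + c u <= mass_below L c v.
Proof.
  intros Hu Huv. unfold mass_below. rewrite <- (sumL_delta L u c), <- sumL_plus by auto.
  apply sumL_le. intros u' Hu'. specialize (Hc u' Hu').
  destruct (excluded_middle_informative (precA w L u' u)) as [H1|H1];
  destruct (excluded_middle_informative (u' = u)) as [H2|H2];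
  destruct (excluded_middle_informative (precA w L u' v)) as [H3|H3]; subst; try lra.
  - exfalso; eapply precA_irrefl; eauto.
  - exfalso; eapply precA_irrefl; eauto.
  - exfalso; apply H3; eapply precA_trans; eauto.
  - tauto.
Qed.

Lemma mass_below_le_total v : In v L -> mass_below L c v + c v <= sumL c L.
Proof.
  intros Hv. unfold mass_below. rewrite <- (sumL_delta L v c), <- sumL_plus by auto.
  apply sumL_le. intros u' Hu'. specialize (Hc u' Hu').
  repeat destruct excluded_middle_informative; subst; try lra.
  exfalso; eapply precA_irrefl; eauto.
Qed.

Lemma mass_below_pred v q : In q L -> precA w L q v ->
  (forall u, In u L -> precA w L u v -> ~ precA w L q u) ->
  mass_below L c v = mass_below L c q + c q.
Proof.
  intros Hq Hqv Hmax. unfold mass_below. rewrite <- (sumL_delta L q c ND Hq), <- sumL_plus.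
  apply sumL_ext. intros u Hu.
  destruct (excluded_middle_informative (u = q)) as [->|Hne].
  - destruct excluded_middle_informative; [|tauto]. destruct excluded_middle_informative; [|ring].
    exfalso; eapply precA_irrefl; eauto.
  - destruct (excluded_middle_informative (precA w L u v)) as [H1|H1];
    destruct (excluded_middle_informative (precA w L u q)) as [H2|H2]; try ring.
    + exfalso. destruct (precA_total w L u q Hu Hq Hne); [tauto|]. eapply Hmax; eauto.
    + exfalso. apply H1. eapply precA_trans; eauto.
Qed.

Lemma mass_below_max m : In m L -> (forall u, In u L -> ~ precA w L m u) ->
  mass_below L c m + c m = sumL c L.
Proof.
  intros Hm Hmax. unfold mass_below. rewrite <- (sumL_delta L m c ND Hm), <- sumL_plus.
  apply sumL_ext. intros u Hu.
  destruct (excluded_middle_informative (u = m)) as [->|Hne].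
  - destruct excluded_middle_informative; [exfalso; eapply precA_irrefl; eauto|ring].
  - destruct excluded_middle_informative; [ring|]. exfalso.
    destruct (precA_total w L u m Hu Hm Hne); [tauto|]. eapply Hmax; eauto.
Qed.

Lemma mass_partition f : sumL c L = 1 -> 0 <= f < 1 ->
  exists v, In v L /\ mass_below L c v <= f < mass_below L c v + c v.
Proof.
  intros Hs Hf.
  assert (Hirr : forall x, ~ precA w L x x) by (intros x; apply precA_irrefl; auto).
  assert (Htr : forall x y z, precA w L x y -> precA w L y z -> precA w L x z)
    by (intros x y z; apply precA_trans; auto).
  assert (Htr' : forall x y z, precA w L y x -> precA w L z y -> precA w L z x) by eauto.
  destruct L as [|a L'] eqn:EL; [simpl in Hs; lra|]. rewrite <- EL in *.
  destruct (ex_min (fun a b => precA w L b a) L (fun _ => True)) as (m & Hm & _ & Hmax); auto.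
  { exists a; rewrite EL; simpl; auto. }
  assert (Hm1 := mass_below_max m Hm (fun u Hu => Hmax u Hu I)).
  destruct (ex_min (precA w L) L (fun u => f < mass_below L c u + c u)) as (v & Hv & Pv & Hvmin); auto.
  { exists m; split; auto. lra. }
  exists v. split; auto. split; auto.
  destruct (classic (exists q, In q L /\ precA w L q v)) as [Hq|Hq].
  - destruct (ex_min (fun a b => precA w L b a) L (fun q => precA w L q v)) as (q & Hql & Hqv & Hqmax); auto.
    rewrite (mass_below_pred v q Hql Hqv); auto.
    destruct (Rle_or_lt (mass_below L c q + c q) f) as [H|H]; auto.
    exfalso. apply (Hvmin q Hql H Hqv).
  - unfold mass_below. rewrite sumL_zero; [lra|]. intros u Hu. destruct excluded_middle_informative; auto.
    exfalso; apply Hq; eauto.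
Qed.
End Mass.

Lemma block_height L v l F u : NoDup L ->
  sumL (fun n => F n * snd n) (block p w L v l u) =
  block_weight p w L v l F u * (IZR (aZ w u) + IZR l - 1)
  + (if excluded_middle_informative (precA w L u v) then block_weight p w L v l F u else 0)
  + (if excluded_middle_informative (u = v) then F (top_lift p w u l) else 0).
Proof.
  intros ND. unfold block_weight, block, top_lift, bot_lift.
  repeat destruct excluded_middle_informative; subst; simpl;
    try (exfalso; eapply precA_irrefl; eauto; fail);
    rewrite ?minus_IZR, ?plus_IZR; simpl; try ring; try congruence.
Qed.

Section Coordinates.
Variables (L : list (Rn p)) (v : Rn p) (l : Z) (F : RnR p -> R).
Hypothesis ND : NoDup L.
Hypothesis Hv : In v L.
Hypothesis Fpos : forall n, In n (Yverts w L v l) -> 0 <= F n.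
Hypothesis Fsum : sumL F (Yverts w L v l) = 1.
Let c := block_weight p w L v l F.
Let Y := Yverts w L v l.

Lemma block_weight_nonneg u : In u L -> 0 <= c u.
Proof. intros Hu. apply sumL_nonneg. intros n Hn. apply Fpos, In_Y; eauto. Qed.

Lemma block_weight_total : sumL c L = 1.
Proof. rewrite <- Fsum. symmetry. apply block_weight_sum. Qed.

Lemma block_weight_coords x : x = lc (RnR p) (map F Y) Y -> coords L c (fst x).
Proof.
  intros ->. split; [|split].
  - apply block_weight_nonneg.
  - apply block_weight_total.
  - apply block_weight_base.
Qed.

Lemma block_weight_height :
  snd (lc (RnR p) (map F Y) Y) = base_height L c + IZR l - 1 + mass_below L c v + F (top_lift p w v l).
Proof.
  rewrite lc_RnR. simpl. unfold Y. rewrite Yverts_blocks, sumL_flat_map.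
  rewrite (sumL_ext _ _ L (fun u _ => block_height L v l F u ND)).
  rewrite !sumL_plus. unfold base_height, mass_below.
  rewrite (sumL_ext (fun u => block_weight p w L v l F u * (IZR (aZ w u) + IZR l - 1))
             (fun u => c u * IZR (aZ w u) + c u * (IZR l - 1))) by (intros; unfold c; ring).
  rewrite sumL_plus, sumL_scalr, block_weight_total.
  rewrite (sumL_delta L v (fun u => F (top_lift p w u l))); auto.
  fold c. ring.
Qed.

Lemma v_block_split :
  F (top_lift p w v l) + F (bot_lift p w v l) = c v /\ 0 <= F (top_lift p w v l) /\ 0 <= F (bot_lift p w v l).
Proof.
  assert (Hin : forall n, In n (block p w L v l v) -> In n Y) by (intros n Hn; apply In_Y; eauto).
  unfold c, block_weight, block in *. destruct excluded_middle_informative; [|congruence]. simpl in *.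
  assert (H1 := Fpos _ (Hin _ (or_introl eq_refl))). assert (H2 := Fpos _ (Hin _ (or_intror (or_introl eq_refl)))).
  repeat split; auto; lra.
Qed.

Section AtHeight.
Variable t : R.
Hypothesis Ht : t - base_height L c = IZR l - 1 + mass_below L c v + F (top_lift p w v l).

Lemma height_window : IZR l - 1 <= t - base_height L c <= IZR l.
Proof.
  destruct v_block_split as (Hsplit & Htop & Hbot).
  assert (HB := mass_below_le_total L c ND block_weight_nonneg v Hv). rewrite block_weight_total in HB.
  assert (HB0 := mass_below_nonneg L c block_weight_nonneg v). lra.
Qed.

Lemma active_at_v k :
  active L c t v k <-> (k = l /\ 0 < F (top_lift p w v l)) \/ (k = (l - 1)%Z /\ 0 < F (bot_lift p w v l)).
Proof.
  destruct v_block_split as (Hsplit & Htop & Hbot).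
  assert (HB := mass_below_le_total L c ND block_weight_nonneg v Hv). rewrite block_weight_total in HB.
  assert (HB0 := mass_below_nonneg L c block_weight_nonneg v).
  unfold active. rewrite Ht. split.
  - intros (Hc & H1 & H2).
    assert (k <= l)%Z by (apply Z_le_of_IZR_lt_succ; lra).
    assert (l - 1 <= k)%Z by (apply Z_ge_of_IZR_pred_lt; rewrite minus_IZR; simpl; lra).
    destruct (Z.eq_dec k l) as [->|Hkl]; [left; split; auto; lra|].
    right. assert (k = l - 1)%Z by lia. subst k. rewrite minus_IZR in H2. split; auto; lra.
  - intros [[-> Hp]|[-> Hp]]; rewrite ?minus_IZR; repeat split; lra.
Qed.

Lemma active_below u k : In u L -> precA w L u v -> active L c t u k <-> (k = l /\ 0 < c u).
Proof.
  intros Hu Huv. destruct v_block_split as (Hsplit & Htop & Hbot).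
  assert (HB := mass_below_le_total L c ND block_weight_nonneg v Hv). rewrite block_weight_total in HB.
  assert (Hlt := mass_below_lt L c ND block_weight_nonneg u v Hu Huv).
  assert (HBu := mass_below_nonneg L c block_weight_nonneg u).
  unfold active. rewrite Ht. split.
  - intros (Hc & H1 & H2).
    assert (k <= l)%Z by (apply Z_le_of_IZR_lt_succ; lra).
    assert (l <= k)%Z by (apply Z_ge_of_IZR_pred_lt; lra).
    split; [lia|auto].
  - intros [-> Hp]. repeat split; lra.
Qed.

Lemma active_above u k : In u L -> u <> v -> ~ precA w L u v ->
  active L c t u k <-> (k = (l - 1)%Z /\ 0 < c u).
Proof.
  intros Hu Hne Huv. destruct v_block_split as (Hsplit & Htop & Hbot).
  assert (Hvu : precA w L v u) by (destruct (precA_total w L u v) as [H|H]; auto; tauto).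
  assert (Hlt := mass_below_lt L c ND block_weight_nonneg v u Hv Hvu).
  assert (HB := mass_below_le_total L c ND block_weight_nonneg u Hu). rewrite block_weight_total in HB.
  assert (HBv := mass_below_nonneg L c block_weight_nonneg v).
  unfold active. rewrite Ht. split.
  - intros (Hc & H1 & H2).
    assert (k <= l - 1)%Z by (apply Z_le_of_IZR_lt_succ; rewrite minus_IZR; lra).
    assert (l - 1 <= k)%Z by (apply Z_ge_of_IZR_pred_lt; rewrite minus_IZR; lra).
    split; [lia|auto].
  - intros [-> Hp]. rewrite minus_IZR. repeat split; lra.
Qed.

Lemma active_iff_weight u k : In u L ->
  (active L c t u k <-> In (u, IZR (aZ w u + k)) Y /\ 0 < F (u, IZR (aZ w u + k))).
Proof.
  intros Hu. unfold Y. rewrite In_Y_lift by auto.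
  assert (Hbot : forall y, bot_lift p w y l = (y, IZR (aZ w y + (l - 1))))
    by (intros y; unfold bot_lift; now replace (aZ w y + (l - 1))%Z with (aZ w y + l - 1)%Z by lia).
  destruct (excluded_middle_informative (u = v)) as [->|Hne].
  - rewrite active_at_v, Hbot. unfold top_lift.
    split; [intros [[-> H]|[-> H]]|intros [[[-> _]|[-> _]] H]]; tauto.
  - destruct (excluded_middle_informative (precA w L u v)) as [Hp|Hp].
    + assert (Hcu : F (u, IZR (aZ w u + l)) = c u).
      { unfold c, block_weight, block, top_lift. destruct excluded_middle_informative; [congruence|].
        destruct excluded_middle_informative; [simpl; ring|contradiction]. }
      rewrite active_below by auto.
      split; [intros [-> H]|intros [[[-> _]|[-> [H|H]]] H']]; try tauto; split; auto; lra.
    + assert (Hcu : F (u, IZR (aZ w u + (l - 1))) = c u).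
      { rewrite <- Hbot. unfold c, block_weight, block. destruct excluded_middle_informative; [congruence|].
        destruct excluded_middle_informative; [contradiction|simpl; ring]. }
      rewrite active_above by auto.
      split; [intros [-> H]|intros [[[-> [H|H]]|[-> _]] H']]; try tauto; split; auto; lra.
Qed.
End AtHeight.
End Coordinates.
End Heights.

Section SpanningVertices.
Variables (p : nat) (w : Rn p -> R) (L : list (Rn p)) (v : Rn p) (l : Z).
Hypothesis ND : NoDup L.
Hypothesis Hv : In v L.
Hypothesis AI : aff_indep (Rn p) L.

Lemma Y_base_coords x : conv (Yverts w L v l) x -> exists c, coords L c (fst x).
Proof.
  intros Hx. destruct (conv_coords _ _ (NoDup_Y p w L v l ND) Hx) as [F (Fpos & Fsum & HF)].
  exists (block_weight p w L v l F). apply (block_weight_coords p w L v l F); auto.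
Qed.

Lemma Y_coords_project F c x : coords (Yverts w L v l) F x -> coords L c (fst x) ->
  (forall u, In u L -> block_weight p w L v l F u = c u) /\
  snd x - base_height p w L c = IZR l - 1 + mass_below p w L c v + F (top_lift p w v l).
Proof.
  intros (Fpos & Fsum & HF) Hc.
  assert (Eq := coords_unique p L _ _ _ AI (block_weight_coords p w L v l F Fpos Fsum x HF) Hc).
  split; auto.
  rewrite <- (base_height_ext p w L _ _ Eq), <- (mass_below_ext p w L _ _ v Eq).
  rewrite HF, block_weight_height by auto. ring.
Qed.

Lemma Y_height_window x c : conv (Yverts w L v l) x -> coords L c (fst x) ->
  IZR l - 1 <= snd x - base_height p w L c <= IZR l.
Proof.
  intros Hx Hc. destruct (conv_coords _ _ (NoDup_Y p w L v l ND) Hx) as [F HF].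
  destruct (Y_coords_project F c x HF Hc) as (Eq & Ht). destruct HF as (Fpos & Fsum & _).
  rewrite <- (base_height_ext p w L _ _ Eq) in Ht |- *. rewrite <- (mass_below_ext p w L _ _ v Eq) in Ht.
  apply (height_window p w L v l F ND Hv Fpos Fsum); auto.
Qed.

(** Spanning vertices of a point [x] of [Y_γ] are its active lifts; this
    description does not depend on [v] and [l]. *)
Lemma SpVt_Y x c n : conv (Yverts w L v l) x -> coords L c (fst x) ->
  (SpVt (Yverts w L v l) x n <->
   exists u k, In u L /\ n = (u, IZR (aZ w u + k)) /\ active p w L c (snd x) u k).
Proof.
  intros Hx Hc.
  assert (Hcrit : forall F u k, coords (Yverts w L v l) F x -> In u L ->
    (active p w L c (snd x) u k <-> In (u, IZR (aZ w u + k)) (Yverts w L v l) /\ 0 < F (u, IZR (aZ w u + k)))).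
  { intros F u k HF Hu. destruct (Y_coords_project F c x HF Hc) as (Eq & Ht). destruct HF as (Fpos & Fsum & _).
    rewrite <- (active_ext p w L _ _ _ u k Eq Hu).
    rewrite <- (base_height_ext p w L _ _ Eq), <- (mass_below_ext p w L _ _ v Eq) in Ht.
    apply (active_iff_weight p w L v l F ND Hv Fpos Fsum); auto. }
  rewrite (SpVt_coords _ _ _ (NoDup_Y p w L v l ND)). split.
  - intros (F & HF & Hn & HFn).
    destruct (In_Y_form p w L v l n Hn) as (u & k & Hu & -> & _).
    exists u, k. split; [auto|split; [reflexivity|]]. apply (Hcrit F u k HF Hu); auto.
  - intros (u & k & Hu & -> & Hact).
    destruct (conv_coords _ _ (NoDup_Y p w L v l ND) Hx) as [F HF].
    exists F. split; auto. apply (Hcrit F u k HF Hu) in Hact. tauto.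
Qed.
End SpanningVertices.

(** ** The bound on Ω *)

Lemma Omega_lc p (w : Rn p -> R) (F : RnR p -> R) (Y : list (RnR p)) : linear_form p w ->
  Omega w (lc (RnR p) (map F Y) Y) = sumL (fun n => F n * Omega w n) Y.
Proof.
  intros [Hadd Hsc]. induction Y as [|n Y IH].
  - unfold Omega. simpl.
    replace (fun _ : Fin.t p => 0) with (vscale (Rn p) 0 (vzero (Rn p)))
      by (apply functional_extensionality; intros; simpl; lra).
    rewrite Hsc. lra.
  - transitivity (Omega w (vadd (RnR p) (vscale (RnR p) (F n) n) (lc (RnR p) (map F Y) Y))); [reflexivity|].
    cbn [sumL]. rewrite <- IH. unfold Omega.
    change (fst (vadd (RnR p) (vscale (RnR p) (F n) n) (lc (RnR p) (map F Y) Y)))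
      with (vadd (Rn p) (vscale (Rn p) (F n) (fst n)) (fst (lc (RnR p) (map F Y) Y))).
    rewrite Hadd, Hsc. simpl. ring.
Qed.

Lemma Omega_vertex_bound p (w : Rn p -> R) L v l n : In n (Yverts w L v l) ->
  AR w v + IZR l - 1 <= Omega w n <= AR w v + IZR l.
Proof.
  intros Hn. apply In_Y in Hn as (u & Hu & Hn).
  assert (HAu := AR_bounds w u). assert (HA := AR_bounds w v).
  unfold block, top_lift, bot_lift in Hn. unfold Omega, AR in *.
  destruct excluded_middle_informative as [->|Hne].
  - simpl in Hn. destruct Hn as [<-|[<-|[]]]; simpl; rewrite ?minus_IZR, plus_IZR; lra.
  - destruct excluded_middle_informative as [Hp|Hp]; simpl in Hn; destruct Hn as [<-|[]]; simpl;
      rewrite ?minus_IZR, plus_IZR.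
    + assert (AR w u <= AR w v) by (destruct Hp as [H|[H _]]; lra). unfold AR in *. lra.
    + assert (~ (AR w u < AR w v)) by (intro; apply Hp; left; auto). unfold AR in *. lra.
Qed.

Lemma Omega_bound p (w : Rn p -> R) L v l k : NoDup L -> linear_form p w -> conv (Yverts w L v l) k ->
  AR w v + IZR l - 1 <= Omega w k <= AR w v + IZR l.
Proof.
  intros ND Hw Hk. destruct (conv_coords _ _ (NoDup_Y p w L v l ND) Hk) as [F (Fpos & Fsum & ->)].
  rewrite Omega_lc by auto.
  assert (Hb := fun n Hn => Omega_vertex_bound p w L v l n Hn).
  split.
  - rewrite <- (Rmult_1_r (AR w v + IZR l - 1)), <- Fsum, <- sumL_scal.
    apply sumL_le. intros n Hn. specialize (Hb n Hn). specialize (Fpos n Hn). nra.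
  - rewrite <- (Rmult_1_r (AR w v + IZR l)), <- Fsum, <- sumL_scal.
    apply sumL_le. intros n Hn. specialize (Hb n Hn). specialize (Fpos n Hn). nra.
Qed.

(** ** Compatibility of activity with translations *)

Section Transport.
Variables (p : nat) (w : Rn p -> R).

Definition indicator (P : Prop) : R := if excluded_middle_informative P then 1 else 0.

(** Two vertices [u], [u'] and a map [phi] shifting [ω] by a constant and
    preserving their order: the change of [1(u' ≺^A u)] is compensated by
    the jumps of [a] at [u] and [u'] (both [A] values lie in [(0, 1]]). *)
Lemma precA_shift L L' (phi : Rn p -> Rn p) theta u u' :
  w (phi u) = w u + theta -> w (phi u') = w u' + theta ->
  (prec L u' u <-> prec L' (phi u') (phi u)) ->
  indicator (precA w L u' u) = indicator (precA w L' (phi u') (phi u))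
    + IZR (aZ w (phi u') - aZ w u') - IZR (aZ w (phi u) - aZ w u).
Proof.
  intros Hu Hu' Hp. assert (A1 := AR_bounds w u). assert (A2 := AR_bounds w u').
  assert (A3 := AR_bounds w (phi u)). assert (A4 := AR_bounds w (phi u')).
  unfold AR in *. rewrite Hu in A3. rewrite Hu' in A4.
  set (d := (aZ w (phi u) - aZ w u)%Z). set (d' := (aZ w (phi u') - aZ w u')%Z).
  assert (Ed : IZR (aZ w (phi u)) = IZR (aZ w u) + IZR d) by (unfold d; rewrite minus_IZR; ring).
  assert (Ed' : IZR (aZ w (phi u')) = IZR (aZ w u') + IZR d') by (unfold d'; rewrite minus_IZR; ring).
  assert (Hlo : (-1 <= d' - d)%Z)
    by (apply Z_ge_of_IZR_pred_lt; rewrite minus_IZR; simpl; rewrite Ed, Ed' in *; lra).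
  assert (Hhi : (d' - d <= 1)%Z)
    by (apply Z_le_of_IZR_lt_succ; rewrite minus_IZR; simpl; rewrite Ed, Ed' in *; lra).
  assert (Hdd : IZR d' = IZR d - 1 \/ IZR d' = IZR d \/ IZR d' = IZR d + 1).
  { assert (Hc : (d' = d - 1)%Z \/ d' = d \/ (d' = d + 1)%Z) by lia.
    destruct Hc as [E|[E|E]]; rewrite E, ?minus_IZR, ?plus_IZR; auto. }
  unfold indicator, precA, AR. rewrite Hu, Hu', Ed, Ed'. rewrite Ed, Ed' in *.
  destruct Hdd as [Hdd|[Hdd|Hdd]]; repeat destruct excluded_middle_informative;
    repeat match goal with
    | H : ~ (_ \/ _) |- _ => apply not_or_and in H
    | H : ~ (_ /\ _) |- _ => apply not_and_or in H
    | H : _ \/ _ |- _ => destruct H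
    | H : _ /\ _ |- _ => destruct H
    end; try lra; try tauto.
Qed.

Section Along.
Variables (L L' : list (Rn p)) (c c' : Rn p -> R) (phi : Rn p -> Rn p) (theta : R).
Hypothesis N1 : NoDup L.
Hypothesis N2 : NoDup L'.
Hypothesis Hinj : forall u v, phi u = phi v -> u = v.
Hypothesis Hc : forall u, In u L -> 0 <= c u.
Hypothesis Hc' : forall y, In y L' -> 0 <= c' y.
Hypothesis Hsum : sumL c L = 1.
Hypothesis Hfwd : forall u, In u L -> 0 < c u -> In (phi u) L' /\ c' (phi u) = c u.
Hypothesis Hback : forall y, In y L' -> 0 < c' y -> exists u, In u L /\ y = phi u /\ 0 < c u.
Hypothesis Hth : forall u, In u L -> 0 < c u -> w (phi u) = w u + theta.
Hypothesis Hord : forall u u', In u L -> In u' L -> 0 < c u -> 0 < c u' ->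
  (prec L u' u <-> prec L' (phi u') (phi u)).

Lemma active_transport u t (z k : Z) : In u L -> 0 < c u ->
  (active p w L c t u k <-> active p w L' c' (t + IZR z) (phi u) (k + z - (aZ w (phi u) - aZ w u))).
Proof.
  intros Hu Hcu. destruct (Hfwd u Hu Hcu) as [Hin Heq].
  assert (Htr := sumL_transport L L' c c' phi N1 N2 Hinj Hc Hc' Hfwd Hback).
  set (D := sumL (fun u' => c u' * IZR (aZ w (phi u') - aZ w u')) L).
  assert (Hh : base_height p w L' c' = base_height p w L c + D).
  { unfold base_height, D. rewrite (Htr (fun y => IZR (aZ w y))), <- sumL_plus.
    apply sumL_ext. intros u' _. rewrite minus_IZR. ring. }
  assert (HB' : mass_below p w L' c' (phi u) = sumL (fun u' => c u' * indicator (precA w L' (phi u') (phi u))) L).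
  { unfold mass_below. rewrite <- (Htr (fun y => indicator (precA w L' y (phi u)))).
    apply sumL_ext. intros y _. unfold indicator. destruct excluded_middle_informative; ring. }
  assert (HB : mass_below p w L c u = mass_below p w L' c' (phi u) + D - IZR (aZ w (phi u) - aZ w u)).
  { rewrite HB'. unfold D. rewrite <- (Rmult_1_l (IZR (aZ w (phi u) - aZ w u))), <- Hsum, <- sumL_scalr.
    rewrite <- sumL_plus, <- sumL_minus. unfold mass_below. apply sumL_ext. intros u' Hu'.
    replace (if excluded_middle_informative (precA w L u' u) then c u' else 0)
      with (c u' * indicator (precA w L u' u)) by (unfold indicator; destruct excluded_middle_informative; ring).
    destruct (Rle_lt_or_eq_dec _ _ (Hc u' Hu')) as [Hp|Hp].
    - rewrite (precA_shift L L' phi theta u u') by first [apply Hth; auto | apply Hord; auto]. ring.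
    - rewrite <- Hp. ring. }
  unfold active. rewrite Heq, Hh, HB, !minus_IZR, !plus_IZR.
  split; intros (Ha & Hb & Hd); repeat split; lra.
Qed.
End Along.
End Transport.

(** Over a point [x0] of [X_α] with coordinates [c], every height in
    [[l - 1, l)] above [Σ c a] is reached in some [Y_(α, v, l)]: choose [v]
    with [B(v) ≤ f < B(v) + c(v)] and split the weight of [v] between its
    two lifts. *)
Lemma Y_point_at_height p (w : Rn p -> R) L c x0 (l : Z) s : NoDup L -> coords L c x0 ->
  IZR l - 1 <= s < IZR l -> exists v, In v L /\ conv (Yverts w L v l) (x0, base_height p w L c + s).
Proof.
  intros ND (Hcpos & Hcs & Hcx) Hs. set (f := s - (IZR l - 1)).
  destruct (mass_partition p w L c ND Hcpos f Hcs) as (v & Hv & HB); [unfold f; lra|].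
  exists v. split; auto.
  set (B := mass_below p w L c v).
  set (F := fun n : RnR p => if excluded_middle_informative (fst n = v) then
              (if excluded_middle_informative (snd n = IZR (aZ w v + l)) then f - B else c v - (f - B))
            else c (fst n)).
  assert (Hlo : IZR (aZ w v + l - 1) <> IZR (aZ w v + l)) by (intros E; apply eq_IZR in E; lia).
  assert (Hblock : forall u, In u L -> block_weight p w L v l F u = c u).
  { intros u Hu. unfold block_weight, block, F, top_lift, bot_lift.
    destruct (excluded_middle_informative (u = v)) as [->|Hne]; simpl;
      repeat (destruct excluded_middle_informative; simpl; try congruence; try contradiction); ring. }
  assert (Fpos : forall n, In n (Yverts w L v l) -> 0 <= F n).
  { intros n Hn. apply In_Y in Hn as (u & Hu & Hn). unfold block, top_lift, bot_lift in Hn. unfold F.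
    destruct (excluded_middle_informative (u = v)) as [->|Hne].
    - simpl in Hn. destruct Hn as [<-|[<-|[]]]; simpl;
        repeat (destruct excluded_middle_informative; simpl; try congruence; try contradiction); unfold B; lra.
    - destruct excluded_middle_informative; simpl in Hn; destruct Hn as [<-|[]]; simpl;
        (destruct excluded_middle_informative; [contradiction|]); auto. }
  assert (Fsum : sumL F (Yverts w L v l) = 1)
    by (rewrite block_weight_sum, <- Hcs; apply sumL_ext; auto).
  apply coords_conv with (f := F). split; [auto|split; auto].
  set (k := lc (RnR p) (map F (Yverts w L v l)) (Yverts w L v l)).
  assert (Hk1 : fst k = x0) by (unfold k; rewrite block_weight_base, Hcx; f_equal; apply map_ext_in; auto).
  assert (Hk2 : snd k = base_height p w L c + s).
  { unfold k. rewrite block_weight_height by auto.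
    rewrite (base_height_ext p w L _ c Hblock), (mass_below_ext p w L _ c v Hblock). fold B.
    unfold F, top_lift; simpl. do 2 (destruct excluded_middle_informative; [|congruence]). unfold f; ring. }
  destruct k as [k1 k2]. simpl in Hk1, Hk2. subst. reflexivity.
Qed.

Lemma height_mod_window (M1 M2 : Z) t : (M1 < M2)%Z ->
  exists z l, (M1 <= l < M2)%Z /\ IZR l - 1 <= t - IZR ((M2 - M1) * z) < IZR l.
Proof.
  intros HM. set (N := (M2 - M1)%Z). assert (HN : 0 < IZR N) by (apply IZR_lt; unfold N; lia).
  assert (EN : IZR N = IZR M2 - IZR M1) by (unfold N; rewrite minus_IZR; auto).
  set (r := (t - IZR M1 + 1) / IZR N).
  set (z := (up r - 1)%Z). destruct (archimed r) as [Hr1 Hr2].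
  assert (Hz : IZR z <= r < IZR z + 1) by (unfold z; rewrite minus_IZR; simpl; lra).
  assert (Er : t - IZR M1 + 1 = r * IZR N) by (unfold r; field; lra).
  set (s := t - IZR N * IZR z).
  assert (Hs : IZR M1 - 1 <= s < IZR M2 - 1) by (unfold s; split; nra).
  set (l := up s). destruct (archimed s) as [Hl1 Hl2]. fold l in Hl1, Hl2.
  exists z, l. split.
  - split; [apply Z_ge_of_IZR_pred_lt; lra|apply lt_IZR; lra].
  - rewrite mult_IZR. fold s. lra.
Qed.

Lemma vadd_cancel p (x y l : Rn p) : vadd (Rn p) x l = vadd (Rn p) y l -> x = y.
Proof.
  intros H. apply functional_extensionality; intros i.
  assert (E := f_equal (fun h => h i) H). simpl in E. lra.
Qed.

Lemma coords_translate p (L L' : list (Rn p)) c c' b lam : NoDup L -> NoDup L' -> aff_indep (Rn p) L' ->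
  coords L c b -> coords L' c' (vadd (Rn p) b lam) ->
  (forall u, In u L -> 0 < c u -> In (vadd (Rn p) u lam) L') ->
  forall u, In u L -> 0 < c u -> c' (vadd (Rn p) u lam) = c u.
Proof.
  intros ND ND' AI' (Hcpos & Hcs & Hcx) Hc' Hsupp u Hu Hcu.
  set (phi := fun y => vadd (Rn p) y lam).
  assert (Hinj : forall y y', phi y = phi y' -> y = y') by (intros y y'; apply vadd_cancel).
  set (S := filter (fun y => dec_bool (0 < c y)) L).
  assert (HS : forall y, In y S <-> In y L /\ 0 < c y) by (intros y; unfold S; rewrite filter_In, dec_bool_true; tauto).
  assert (Hfilter : forall g, (forall y, In y L -> c y = 0 -> g y = 0) -> sumL g L = sumL g S).
  { intros g Hg. apply sumL_filter. intros y Hy Hn. apply Hg; auto.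
    destruct (Rle_lt_or_eq_dec _ _ (Hcpos y Hy)); auto; contradiction. }
  assert (HSsum : sumL c S = 1) by (rewrite <- Hcs; symmetry; apply Hfilter; auto).
  assert (Hbary : bary (Rn p) (map phi S) (map c S) (vadd (Rn p) b lam)).
  { split; [rewrite !length_map; auto|split; [|split]].
    - apply Forall_forall. intros r Hr. apply in_map_iff in Hr as (y & <- & Hy). apply HS in Hy. lra.
    - rewrite sumR_map; auto.
    - rewrite lc_map_Rn, Hcx, lc_Rn. apply functional_extensionality; intros i.
      transitivity (sumL (fun y : Rn p => c y * y i) S + lam i).
      + rewrite <- Hfilter by (intros y _ E; rewrite E; ring). reflexivity.
      + rewrite (sumL_ext (fun y => c y * phi y i) (fun y => c y * y i + c y * lam i)) by (intros; unfold phi; simpl; ring).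
        rewrite sumL_plus, sumL_scalr, HSsum. ring. }
  assert (Hsub : forall y, In y (map phi S) -> In y L').
  { intros y Hy. apply in_map_iff in Hy as (u' & <- & Hu'). apply HS in Hu'. apply Hsupp; tauto. }
  assert (Hr := face_coords_Rn p (map phi S) L' (map c S) _ ND' Hsub Hbary).
  change (c' (phi u) = c u). rewrite (coords_unique p _ _ _ _ AI' Hc' Hr (phi u) (Hsupp u Hu Hcu)).
  apply face_weight_map; [apply NoDup_filter, ND|exact Hinj|apply HS; auto].
Qed.

(** ** The Λ̂-complex axioms for [Y] *)

Section Complex.
Variables (p : nat) (Lam : Rn p -> Prop) (I : Type) (X : I -> list (Rn p)) (M1 M2 : Z) (w : Rn p -> R).
Hypothesis HOC : ordered_complex (Rn p) p X.
Hypothesis HLC : Lambda_complex (Rn p) Lam X.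
Hypothesis HM : (M1 < M2)%Z.
Hypothesis Hw : linear_form p w.

Lemma X_NoDup a : NoDup (X a).
Proof. apply (HOC a). Qed.

Lemma X_aff_indep a : aff_indep (Rn p) (X a).
Proof. apply (HOC a). Qed.

(** Axiom (i) for [X]: coordinates of a common point of [X_a] and [X_a']
    agree on the support, which consists of common vertices. *)
Lemma coords_common a a' b c c' : coords (X a) c b -> coords (X a') c' b ->
  forall u, In u (X a) -> 0 < c u -> In u (X a') /\ c' u = c u.
Proof.
  intros Hc Hc' u Hu Hcu. destruct HLC as (HX1 & _).
  destruct (HX1 a a') as [Hd|Hi].
  - exfalso. apply (Hd b). split; eapply coords_conv; eauto.
  - destruct (proj1 (Hi b) (conj (coords_conv _ _ _ Hc) (coords_conv _ _ _ Hc'))) as (L0 & HL0 & [cs Hcs]).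
    rewrite Forall_forall in HL0.
    assert (R1 := face_coords_Rn p L0 (X a) cs b (X_NoDup a) (fun y Hy => proj1 (HL0 y Hy)) Hcs).
    assert (R2 := face_coords_Rn p L0 (X a') cs b (X_NoDup a') (fun y Hy => proj2 (HL0 y Hy)) Hcs).
    assert (E1 := coords_unique p _ _ _ _ (X_aff_indep a) Hc R1 u Hu).
    destruct (classic (In u L0)) as [HuL|HuL].
    + split; [apply (HL0 u HuL)|]. rewrite E1.
      apply (coords_unique p _ _ _ _ (X_aff_indep a') Hc' R2 u), (HL0 u HuL).
    + rewrite face_weight_out in E1 by auto. lra.
Qed.

Lemma base_height_common a a' b c c' : coords (X a) c b -> coords (X a') c' b ->
  base_height p w (X a') c' = base_height p w (X a) c.
Proof.
  intros Hc Hc'. unfold base_height.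
  apply (sumL_transport (X a) (X a') c c' (fun u => u) (X_NoDup a) (X_NoDup a') (fun u v H => H)
         (proj1 Hc) (proj1 Hc') (coords_common a a' b c c' Hc Hc')).
  intros y Hy Hp. destruct (coords_common a' a b c' c Hc' Hc y Hy Hp) as [H1 H2].
  exists y. repeat split; auto. lra.
Qed.

Lemma active_common a a' b c c' t u k : coords (X a) c b -> coords (X a') c' b -> In u (X a) -> 0 < c u ->
  (active p w (X a) c t u k <-> active p w (X a') c' t u k).
Proof.
  intros Hc Hc' Hu Hcu. destruct HLC as (_ & HX2 & _).
  assert (H2 : forall y, In y (X a') -> 0 < c' y -> exists u, In u (X a) /\ y = u /\ 0 < c u).
  { intros y Hy Hp. destruct (coords_common a' a b c' c Hc' Hc y Hy Hp) as [H1 H2].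
    exists y. repeat split; auto. lra. }
  assert (Hord : forall u0 u', In u0 (X a) -> In u' (X a) -> 0 < c u0 -> 0 < c u' ->
                 (prec (X a) u' u0 <-> prec (X a') u' u0)).
  { intros. apply HX2; auto; apply (coords_common a a' b c c' Hc Hc'); auto. }
  rewrite (active_transport p w (X a) (X a') c c' (fun u => u) 0 (X_NoDup a) (X_NoDup a') (fun u v H => H)
    (proj1 Hc) (proj1 Hc') (proj1 (proj2 Hc)) (coords_common a a' b c c' Hc Hc') H2
    (fun u _ _ => eq_sym (Rplus_0_r (w u))) Hord u t 0 k Hu Hcu).
  rewrite Rplus_0_r. replace (k + 0 - (aZ w u - aZ w u))%Z with k by lia. tauto.
Qed.

Lemma Y_ordered_complex : ordered_complex (RnR p) (S p) (Yfam w X M1 M2).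
Proof.
  intros g. unfold Yfam. destruct (HOC (jal g)) as (Hl & ND & AI). split; [|split].
  - rewrite Yverts_blocks, length_blocks_in; auto. apply jv_in.
  - apply NoDup_Y; auto.
  - apply aff_indep_Y; auto. apply jv_in.
Qed.

Lemma Y_Omega_bound (g : Jidx X M1 M2) (k : RnR p) : conv (Yfam w X M1 M2 g) k ->
  AR w (jv g) + IZR (jl g) - 1 <= Omega w k <= AR w (jv g) + IZR (jl g).
Proof. apply Omega_bound; auto. apply X_NoDup. Qed.

Lemma Y_SpVt_common (g g' : Jidx X M1 M2) x : conv (Yfam w X M1 M2 g) x -> conv (Yfam w X M1 M2 g') x ->
  forall n, SpVt (Yfam w X M1 M2 g) x n -> In n (Yfam w X M1 M2 g').
Proof.
  unfold Yfam. intros Hx Hx' n Hn.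
  destruct (Y_base_coords p w _ _ _ (X_NoDup _) x Hx) as [c Hc].
  destruct (Y_base_coords p w _ _ _ (X_NoDup _) x Hx') as [c' Hc'].
  rewrite (SpVt_Y p w _ _ _ (X_NoDup _) (jv_in _ _ _ g) (X_aff_indep _) x c n Hx Hc) in Hn.
  destruct Hn as (u & k & Hu & -> & Hact).
  assert (Hcu : 0 < c u) by apply Hact.
  destruct (coords_common _ _ _ c c' Hc Hc' u Hu Hcu) as [Hu' _].
  apply (SpVt_In _ x).
  rewrite (SpVt_Y p w _ _ _ (X_NoDup _) (jv_in _ _ _ g') (X_aff_indep _) x c' _ Hx' Hc').
  exists u, k. split; auto. split; auto. rewrite <- (active_common _ _ _ c c' _ _ _ Hc Hc' Hu Hcu). auto.
Qed.

Lemma Y_intersection (g g' : Jidx X M1 M2) x :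
  (conv (Yfam w X M1 M2 g) x /\ conv (Yfam w X M1 M2 g') x) <->
  convP (RnR p) (fun v => In v (Yfam w X M1 M2 g) /\ In v (Yfam w X M1 M2 g')) x.
Proof.
  assert (NDY : forall g, NoDup (Yfam w X M1 M2 g)) by (intros; apply NoDup_Y, X_NoDup).
  split.
  - intros [Hx Hx']. destruct (conv_coords _ _ (NDY g) Hx) as [F (Fpos & Fsum & HF)].
    set (L0 := filter (fun n => dec_bool (0 < F n)) (Yfam w X M1 M2 g)).
    assert (HL0 : forall n, In n L0 <-> In n (Yfam w X M1 M2 g) /\ 0 < F n)
      by (intros n; unfold L0; rewrite filter_In, dec_bool_true; tauto).
    assert (Hfilter : forall G, sumL (fun n => F n * G n) (Yfam w X M1 M2 g) = sumL (fun n => F n * G n) L0).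
    { intros G. apply sumL_filter. intros n Hn Hp. replace (F n) with 0 by (specialize (Fpos n Hn); lra). ring. }
    exists L0. split.
    + apply Forall_forall. intros n Hn. apply HL0 in Hn as [Hn Hp].
      split; auto. apply (Y_SpVt_common g g' x Hx Hx').
      apply (SpVt_coords _ _ _ (NDY g)). exists F. repeat split; auto.
    + apply coords_conv with (f := F). split; [|split].
      * intros n Hn. apply HL0 in Hn; lra.
      * rewrite <- Fsum, (sumL_ext F (fun n => F n * 1)), (sumL_ext F (fun n => F n * 1)) by (intros; ring).
        symmetry. apply Hfilter.
      * rewrite HF, !lc_RnR, Hfilter. f_equal. apply functional_extensionality; intros i. apply Hfilter.
  - intros (L0 & HL0 & Hx). rewrite Forall_forall in HL0.
    split; (apply (conv_face_RnR p L0); [apply NDY|intros y Hy; apply HL0, Hy|exact Hx]).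
Qed.

Lemma Y_order_common (g g' : Jidx X M1 M2) n n' : In n (Yfam w X M1 M2 g) -> In n' (Yfam w X M1 M2 g) ->
  In n (Yfam w X M1 M2 g') -> In n' (Yfam w X M1 M2 g') ->
  (prec (Yfam w X M1 M2 g) n n' <-> prec (Yfam w X M1 M2 g') n n').
Proof.
  unfold Yfam. intros H1 H2 H3 H4. destruct HLC as (_ & HX2 & _).
  assert (E := HX2 (jal g) (jal g') (fst n) (fst n')
                 (In_Y_fst _ _ _ _ _ _ H1) (In_Y_fst _ _ _ _ _ _ H2)
                 (In_Y_fst _ _ _ _ _ _ H3) (In_Y_fst _ _ _ _ _ _ H4)).
  rewrite !prec_Y by apply X_NoDup. tauto.
Qed.

Lemma Y_order_translate (g g' : Jidx X M1 M2) n n' l : LamHat Lam M1 M2 l ->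
  In n (Yfam w X M1 M2 g) -> In n' (Yfam w X M1 M2 g) ->
  In (vadd (RnR p) n l) (Yfam w X M1 M2 g') -> In (vadd (RnR p) n' l) (Yfam w X M1 M2 g') ->
  (prec (Yfam w X M1 M2 g) n n' <-> prec (Yfam w X M1 M2 g') (vadd (RnR p) n l) (vadd (RnR p) n' l)).
Proof.
  unfold Yfam. destruct n as [u s], n' as [u' s'], l as [lam sl].
  intros [Hl _] H1 H2 H3 H4. destruct HLC as (_ & _ & HX3 & _).
  assert (E := HX3 (jal g) (jal g') u u' lam Hl (In_Y_fst _ _ _ _ _ _ H1) (In_Y_fst _ _ _ _ _ _ H2)
                 (In_Y_fst _ _ _ _ _ _ H3) (In_Y_fst _ _ _ _ _ _ H4)).
  rewrite !prec_Y by apply X_NoDup. simpl.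
  split; intros (_ & _ & [Hp|[He Hs]]); repeat split; auto.
  - left; apply E; auto.
  - right; split; [rewrite He; auto|lra].
  - left; apply E; auto.
  - right; split; [apply (vadd_cancel p _ _ lam), He|lra].
Qed.

(** Axiom (iv), surjectivity: lift a representative in [X] and correct its
    height by a multiple of [M2 - M1]. *)
Lemma Y_covers_quotient (y : RnR p) :
  exists x l, inX (RnR p) (Yfam w X M1 M2) x /\ LamHat Lam M1 M2 l /\ y = vadd (RnR p) x l.
Proof.
  destruct y as [y1 t]. destruct HLC as (_ & _ & _ & HX4 & _).
  destruct (HX4 y1) as (x0 & lam & (a & Hx0) & Hlam & Hy).
  destruct (conv_coords _ _ (X_NoDup a) Hx0) as [c Hc].
  set (h := base_height p w (X a) c).
  destruct (height_mod_window M1 M2 (t - h) HM) as (z & l & Hlr & Hwin).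
  destruct (Y_point_at_height p w (X a) c x0 l (t - h - IZR ((M2 - M1) * z)) (X_NoDup a) Hc Hwin)
    as (v & Hv & Hpt).
  exists (x0, h + (t - h - IZR ((M2 - M1) * z))), (lam, IZR ((M2 - M1) * z)). split; [|split].
  - exists {| jal := a; jv := v; jl := l; jv_in := Hv; jl_range := Hlr |}. exact Hpt.
  - split; [exact Hlam|exists z; reflexivity].
  - rewrite Hy.
    change ((vadd (Rn p) x0 lam, t) = (vadd (Rn p) x0 lam, h + (t - h - IZR ((M2 - M1) * z)) + IZR ((M2 - M1) * z))).
    f_equal. ring.
Qed.

Lemma Y_interior_project (g : Jidx X M1 M2) x : Defs.interior (RnR p) (Yfam w X M1 M2 g) x ->
  conv (Yfam w X M1 M2 g) x /\ Defs.interior (Rn p) (X (jal g)) (fst x) /\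
  exists e, 0 < e /\ conv (Yfam w X M1 M2 g) (fst x, snd x + e) /\ conv (Yfam w X M1 M2 g) (fst x, snd x - e).
Proof.
  intros (e & He & H). split; [|split].
  - apply H. simpl. split; [intros i|]; rewrite Rminus_diag, Rabs_R0; auto.
  - exists e. split; auto. intros b' Hb'.
    assert (Hc : conv (Yfam w X M1 M2 g) (b', snd x)).
    { apply H. simpl. split; auto. rewrite Rminus_diag, Rabs_R0; auto. }
    destruct (Y_base_coords p w _ _ _ (X_NoDup _) _ Hc) as [c Hc']. eapply coords_conv; eauto.
  - exists (e / 2). split; [lra|split]; apply H; simpl; (split; [intros i; rewrite Rminus_diag, Rabs_R0; auto|]).
    + replace (snd x - (snd x + e / 2)) with (- (e / 2)) by ring. rewrite Rabs_Ropp, Rabs_pos_eq; lra.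
    + replace (snd x - (snd x - e / 2)) with (e / 2) by ring. rewrite Rabs_pos_eq; lra.
Qed.

Lemma Y_interior_height (g : Jidx X M1 M2) x c : Defs.interior (RnR p) (Yfam w X M1 M2 g) x ->
  coords (X (jal g)) c (fst x) -> IZR M1 - 1 < snd x - base_height p w (X (jal g)) c < IZR M2 - 1.
Proof.
  intros Hi Hc. destruct (Y_interior_project g x Hi) as (_ & _ & e & He & H1 & H2).
  assert (B1 := Y_height_window p w _ _ _ (X_NoDup _) (jv_in _ _ _ g) (X_aff_indep _) _ c H1 Hc).
  assert (B2 := Y_height_window p w _ _ _ (X_NoDup _) (jv_in _ _ _ g) (X_aff_indep _) _ c H2 Hc).
  simpl in B1, B2. destruct (jl_range _ _ _ g) as [R1 R2].
  apply IZR_le in R1. assert (R3 : IZR (jl g + 1) <= IZR M2) by (apply IZR_le; lia). rewrite plus_IZR in R3.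
  split; lra.
Qed.

(** Axiom (iv), injectivity on interiors: the bases agree by (iv) for [X],
    and the heights then differ by a multiple of [M2 - M1] smaller than it. *)
Lemma Y_interior_injective (g g' : Jidx X M1 M2) x y l :
  Defs.interior (RnR p) (Yfam w X M1 M2 g) x -> Defs.interior (RnR p) (Yfam w X M1 M2 g') y ->
  LamHat Lam M1 M2 l -> y = vadd (RnR p) x l -> y = x.
Proof.
  intros Hx Hy [Hl [z Hz]] Hyx. destruct HLC as (_ & _ & _ & _ & HX5 & _).
  destruct (Y_interior_project g x Hx) as (Cx & Ix & _). destruct (Y_interior_project g' y Hy) as (Cy & Iy & _).
  assert (E1 : fst y = vadd (Rn p) (fst x) (fst l)) by (rewrite Hyx; reflexivity).
  assert (E2 : snd y = snd x + snd l) by (rewrite Hyx; reflexivity).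
  assert (Ef := HX5 _ _ _ _ _ Ix Iy Hl E1).
  destruct (Y_base_coords p w _ _ _ (X_NoDup _) _ Cx) as [c Hc].
  destruct (Y_base_coords p w _ _ _ (X_NoDup _) _ Cy) as [c' Hc'].
  assert (S1 := Y_interior_height g x c Hx Hc). assert (S2 := Y_interior_height g' y c' Hy Hc').
  rewrite Ef in Hc'. rewrite (base_height_common _ _ _ c c' Hc Hc'), E2, Hz, mult_IZR in S2.
  assert (HN : 0 < IZR M2 - IZR M1) by (rewrite <- minus_IZR; apply IZR_lt; lia).
  rewrite minus_IZR in S2.
  assert (Hz0 : z = 0%Z).
  { assert (-1 < IZR z < 1) by (split; nra).
    assert (-1 < z)%Z by (apply lt_IZR; simpl; lra). assert (z < 1)%Z by (apply lt_IZR; simpl; lra). lia. }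
  subst z. destruct x as [x1 x2], y as [y1 y2]. simpl in *. rewrite Ef, E2, Hz, Z.mul_0_r. f_equal. simpl. ring.
Qed.
(** Axiom (v) for [X], made quantitative: the translation by [λ] matches the
    supports of the coordinates of [b] and [b + λ], preserving weights. *)
Lemma coords_support_translate a a' b c c' lam : coords (X a) c b -> coords (X a') c' (vadd (Rn p) b lam) ->
  Lam lam ->
  (forall u, In u (X a) -> 0 < c u -> In (vadd (Rn p) u lam) (X a') /\ c' (vadd (Rn p) u lam) = c u) /\
  (forall y, In y (X a') -> 0 < c' y -> exists u, In u (X a) /\ y = vadd (Rn p) u lam /\ 0 < c u).
Proof.
  intros Hc Hc' Hl. destruct HLC as (_ & _ & _ & _ & _ & HX6).
  assert (HS := HX6 a a' b _ lam (coords_conv _ _ _ Hc) (coords_conv _ _ _ Hc') Hl eq_refl).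
  assert (SX := fun u => SpVt_by_coords p (X a) b c u (X_NoDup a) (X_aff_indep a) Hc).
  assert (SX' := fun u => SpVt_by_coords p (X a') _ c' u (X_NoDup a') (X_aff_indep a') Hc').
  assert (Hin : forall u, In u (X a) -> 0 < c u -> In (vadd (Rn p) u lam) (X a')).
  { intros u Hu Hp. apply (proj1 (SX' _)), HS. exists u. split; auto. apply SX; auto. }
  split.
  - intros u Hu Hp. split; auto.
    apply (coords_translate p (X a) (X a') c c' b lam (X_NoDup a) (X_NoDup a') (X_aff_indep a') Hc Hc' Hin); auto.
  - intros y Hy Hp. destruct (proj1 (HS y) (proj2 (SX' y) (conj Hy Hp))) as (u & Hu & ->).
    apply SX in Hu. exists u. tauto.
Qed.

(** Axiom (v): spanning vertices are compatible with translations by [Λ̂];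
    by [SpVt_Y] this reduces to [active_transport]. *)
Lemma Y_SpVt_translate (g g' : Jidx X M1 M2) x x' l : conv (Yfam w X M1 M2 g) x -> conv (Yfam w X M1 M2 g') x' ->
  LamHat Lam M1 M2 l -> x' = vadd (RnR p) x l ->
  forall n', SpVt (Yfam w X M1 M2 g') x' n' <-> exists n, SpVt (Yfam w X M1 M2 g) x n /\ n' = vadd (RnR p) n l.
Proof.
  destruct l as [lam sl]. intros Hx Hx' [Hl [z Hz]] Hxx'. simpl in Hl, Hz. unfold Yfam in *.
  set (a := jal g) in *. set (a' := jal g') in *. set (Z0 := ((M2 - M1) * z)%Z) in *.
  destruct (Y_base_coords p w _ _ _ (X_NoDup _) _ Hx) as [c Hc].
  destruct (Y_base_coords p w _ _ _ (X_NoDup _) _ Hx') as [c' Hc'].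
  assert (E1 : fst x' = vadd (Rn p) (fst x) lam) by (rewrite Hxx'; reflexivity).
  assert (E2 : snd x' = snd x + IZR Z0) by (rewrite Hxx', <- Hz; reflexivity).
  rewrite E1 in Hc'. set (phi := fun u => vadd (Rn p) u lam).
  destruct (coords_support_translate a a' (fst x) c c' lam Hc Hc' Hl) as [Hfwd Hback].
  assert (HI := active_transport p w (X a) (X a') c c' phi (w lam) (X_NoDup a) (X_NoDup a')
    (fun u v => vadd_cancel p u v lam) (proj1 Hc) (proj1 Hc') (proj1 (proj2 Hc)) Hfwd Hback
    (fun u _ _ => proj1 Hw u lam)
    (fun u0 u' Hu0 Hu' Hc0 Hc1 => proj1 (proj2 (proj2 HLC)) _ _ _ _ _ Hl Hu' Hu0
                                    (proj1 (Hfwd u' Hu' Hc1)) (proj1 (Hfwd u0 Hu0 Hc0)))).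
  assert (Hlift : forall u k, vadd (RnR p) (u, IZR (aZ w u + k)) (lam, sl) =
                              (phi u, IZR (aZ w (phi u) + (k + Z0 - (aZ w (phi u) - aZ w u))))).
  { intros u k. change (vadd (RnR p) (u, IZR (aZ w u + k)) (lam, sl)) with (phi u, IZR (aZ w u + k) + sl).
    f_equal. rewrite Hz, <- plus_IZR. f_equal. lia. }
  intros n'. rewrite (SpVt_Y p w (X a') _ _ (X_NoDup a') (jv_in _ _ _ g') (X_aff_indep a') x' c' n' Hx').
  2:{ rewrite E1; exact Hc'. }
  setoid_rewrite (SpVt_Y p w (X a) _ _ (X_NoDup a) (jv_in _ _ _ g) (X_aff_indep a) x c _ Hx Hc).
  rewrite E2. split.
  - intros (u' & k' & Hu' & -> & Hact). assert (Hcp : 0 < c' u') by apply Hact.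
    destruct (Hback u' Hu' Hcp) as (u & Hu & -> & Hcu).
    set (k := (k' - Z0 + (aZ w (phi u) - aZ w u))%Z).
    exists (u, IZR (aZ w u + k)). split.
    + exists u, k. split; [auto|split; [reflexivity|]]. apply (HI u (snd x) Z0 k Hu Hcu).
      replace (k + Z0 - (aZ w (phi u) - aZ w u))%Z with k' by (unfold k; lia). exact Hact.
    + rewrite Hlift. do 3 f_equal. unfold k. lia.
  - intros (n & (u & k & Hu & -> & Hact) & ->). assert (Hcu : 0 < c u) by apply Hact.
    eexists (phi u), _. split; [apply (Hfwd u Hu Hcu)|split; [apply Hlift|]].
    apply (HI u (snd x) Z0 k Hu Hcu), Hact.
Qed.
End Complex.

Theorem proposition1 (p : nat) (Lam : Rn p -> Prop) (I : Type) (X : I -> list (Rn p))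
  (M1 M2 : Z) (w : Rn p -> R) :
  full_lattice p Lam ->
  ordered_complex (Rn p) p X ->
  Lambda_complex (Rn p) Lam X ->
  (M1 < M2)%Z ->
  linear_form p w ->
  ordered_complex (RnR p) (S p) (Yfam w X M1 M2) /\
  Lambda_complex (RnR p) (LamHat Lam M1 M2) (Yfam w X M1 M2) /\
  (forall (g : Jidx X M1 M2) (k : RnR p), conv (Yfam w X M1 M2 g) k ->
     AR w (jv g) + IZR (jl g) - 1 <= Omega w k <= AR w (jv g) + IZR (jl g)).
Proof.
  intros _ HOC HLC HM Hw. split; [|split].
  - exact (Y_ordered_complex p I X M1 M2 w HOC).
  - split; [|split; [|split; [|split; [|split]]]].
    + intros g g'. right. exact (Y_intersection p Lam I X M1 M2 w HOC HLC g g').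
    + exact (Y_order_common p Lam I X M1 M2 w HOC HLC).
    + exact (Y_order_translate p Lam I X M1 M2 w HOC HLC).
    + exact (Y_covers_quotient p Lam I X M1 M2 w HOC HLC HM).
    + exact (Y_interior_injective p Lam I X M1 M2 w HOC HLC HM).
    + exact (Y_SpVt_translate p Lam I X M1 M2 w HOC HLC Hw).
  - exact (Y_Omega_bound p I X M1 M2 w HOC Hw).
Qed.
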